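(* Let $L<U$ be reals and $n\ge1$. For the variance function $f:[L,U]^n\to\mathbb{R}$, $f(x_1,\dots,x_n)=\frac1n\sum_{i=1}^n(x_i-\bar x)^2$ with $\bar x=\frac1n\sum_{i=1}^n x_i$, and any $\beta>0$, the $\beta$-smooth sensitivity $S^*_{f,\beta}(V)$ of $f$ at a given dataset $V=(x_1,\dots,x_n)\in[L,U]^n$ can be computed in $\mathcal{O}(n^2)$ time.
   Context: A dataset is a list $V=(x_1,\dots,x_n)$ of $n$ real numbers in $[L,U]$. For datasets $x,y\in[L,U]^n$, $d(x,y)$ is the number of positions in which they differ; $x,y$ are neighbors if $d(x,y)=1$. The local sensitivity of $f$ at $x$ is $LS_f(x)=\max_{y:\,d(x,y)=1}|f(x)-f(y)|$. For $\beta>0$, the $\beta$-smooth sensitivity of $f$ at $x$ is $S^*_{f,\beta}(x)=\max_{y\in[L,U]^n} LS_f(y)\,e^{-\beta d(x,y)}$. *)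

From Stdlib Require Import Reals Arith Lia List.
Open Scope R_scope.

(* A dataset of size n is x : nat -> R, with entries x 0, ..., x (n-1);
   values at positions >= n are irrelevant. *)

Fixpoint sumR (n : nat) (g : nat -> R) : R :=
  match n with O => 0 | S m => sumR m g + g m end.

Definition mean (n : nat) (x : nat -> R) : R := sumR n x / INR n.

Definition variance (n : nat) (x : nat -> R) : R :=
  sumR n (fun i => (x i - mean n x) ^ 2) / INR n.

Definition inbox (n : nat) (L U : R) (x : nat -> R) : Prop :=
  forall i, (i < n)%nat -> L <= x i <= U.

Fixpoint dist (n : nat) (x y : nat -> R) : nat :=
  match n with
  | O => O
  | S m => (dist m x y + (if Req_EM_T (x m) (y m) then 0 else 1))%nat
  end.

(* { |f(y) - f(z)| : z in [L,U]^n, d(y,z) = 1 } ; LS_f(y) is its sup (= max) *)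
Definition LSset (n : nat) (L U : R) (y : nat -> R) : R -> Prop :=
  fun v => exists z, inbox n L U z /\ dist n y z = 1%nat /\
                     v = Rabs (variance n y - variance n z).

(* { LS_f(y) e^{-beta d(x,y)} : y in [L,U]^n } ; S*_{f,beta}(x) is its sup (= max) *)
Definition SSset (n : nat) (L U beta : R) (x : nat -> R) : R -> Prop :=
  fun v => exists y, inbox n L U y /\
           exists l, is_lub (LSset n L U y) l /\
                     v = l * exp (- beta * INR (dist n x y)).

(* Real registers Rm : nat -> R, natural-number registers Nm : nat -> nat.
   Real constants are only obtainable by casting naturals (no arbitrary real
   constants, no floor from reals to naturals). *)
Inductive instr : Type :=
  | RCopy  (d s : nat)
  | RAdd   (d a b : nat)
  | RSub   (d a b : nat)
  | RMul   (d a b : nat)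
  | RDiv   (d a b : nat)          (* R[d] := R[a] / R[b]  (0 if R[b] = 0) *)
  | RExp   (d a : nat)
  | RSqrt  (d a : nat)
  | RofN   (d i : nat)
  | RLoadI (d i : nat)
  | RStoreI (i s : nat)
  | NConst (d k : nat)
  | NAdd   (d a b : nat)
  | NSub   (d a b : nat)          (* N[d] := N[a] - N[b] (truncated) *)
  | NMul   (d a b : nat)
  | JRLt   (a b l : nat)
  | JNZ    (i l : nat)            (* if N[i] = 0 then goto l *)
  | Jmp    (l : nat)
  | Halt.

Record state : Type := mkState { pc : nat; Nm : nat -> nat; Rm : nat -> R }.

Definition updN (f : nat -> nat) (k v : nat) : nat -> nat :=
  fun j => if Nat.eqb j k then v else f j.
Definition updR (f : nat -> R) (k : nat) (v : R) : nat -> R :=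
  fun j => if Nat.eqb j k then v else f j.

Definition next (s : state) (N : nat -> nat) (Rr : nat -> R) : state :=
  mkState (S (pc s)) N Rr.

Definition step (p : list instr) (s : state) : option state :=
  let N := Nm s in let Rr := Rm s in
  match nth_error p (pc s) with
  | None => None
  | Some Halt => None
  | Some (RCopy d a) => Some (next s N (updR Rr d (Rr a)))
  | Some (RAdd d a b) => Some (next s N (updR Rr d (Rr a + Rr b)))
  | Some (RSub d a b) => Some (next s N (updR Rr d (Rr a - Rr b)))
  | Some (RMul d a b) => Some (next s N (updR Rr d (Rr a * Rr b)))
  | Some (RDiv d a b) =>
      Some (next s N (updR Rr d (if Req_EM_T (Rr b) 0 then 0 else Rr a / Rr b)))
  | Some (RExp d a) => Some (next s N (updR Rr d (exp (Rr a))))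
  | Some (RSqrt d a) => Some (next s N (updR Rr d (sqrt (Rr a))))
  | Some (RofN d i) => Some (next s N (updR Rr d (INR (N i))))
  | Some (RLoadI d i) => Some (next s N (updR Rr d (Rr (N i))))
  | Some (RStoreI i a) => Some (next s N (updR Rr (N i) (Rr a)))
  | Some (NConst d k) => Some (next s (updN N d k) Rr)
  | Some (NAdd d a b) => Some (next s (updN N d (N a + N b)%nat) Rr)
  | Some (NSub d a b) => Some (next s (updN N d (N a - N b)%nat) Rr)
  | Some (NMul d a b) => Some (next s (updN N d (N a * N b)%nat) Rr)
  | Some (JRLt a b l) =>
      if Rlt_dec (Rr a) (Rr b) then Some (mkState l N Rr) else Some (next s N Rr)
  | Some (JNZ i l) =>
      if Nat.eqb (N i) 0 then Some (mkState l N Rr) else Some (next s N Rr)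
  | Some (Jmp l) => Some (mkState l N Rr)
  end.

Fixpoint run (p : list instr) (t : nat) (s : state) : state :=
  match t with
  | O => s
  | S t' => match step p s with None => s | Some s' => run p t' s' end
  end.

Definition halted (p : list instr) (s : state) : Prop := step p s = None.

(* Input encoding: N[0] = n; R[0] = L, R[1] = U, R[2] = beta,
   R[3+i] = x_i for i < n; all other registers 0.  Output: R[0] at halt. *)
Definition init (n : nat) (L U beta : R) (x : nat -> R) : state :=
  mkState 0 (fun k => if Nat.eqb k 0 then n else 0%nat)
    (fun k => match k with
              | 0%nat => L | 1%nat => U | 2%nat => beta
              | S (S (S i)) => if Nat.ltb i n then x i else 0
              end).

(* Replacing the entry y_j of a dataset y by b changes its variance by
   (n-1)/n^2 ((y_j - m)^2 - (b - m)^2), where m is the mean of the other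
   entries.  Hence S*(x) is the maximum, over an entry j and the number k of
   other entries in which y differs from x, of the largest such change for y,
   damped by e^{-beta k} if y_j = x_j and by e^{-beta (k+1)} otherwise.  For
   fixed (j, k) the mean m ranges over an interval whose ends are reached by
   moving the k largest, resp. smallest, other entries of x to L, resp. U; as a
   function of m the largest change is a maximum of convex functions, so it
   peaks at one of these ends.  This leaves four explicit candidates per pair
   (j, k), built from sums of the k largest entries of x, which a dynamic
   program tabulates for all k in O(n^2) steps. *)

From Stdlib Require Import Reals Lra Lia Arith List FunctionalExtensionality.
Import ListNotations.
Open Scope R_scope.

(* The program computes maxima through [JRLt] branches and divides with
   [RDiv], so its output is literally a term built from these operations. *)
Definition if_lt (a b c e : R) : R := if Rlt_dec a b then c else e.
Definition rmax (a b : R) : R := if_lt a b b a.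
Definition rmin (a b : R) : R := if_lt b a b a.
Definition rabs (t : R) : R := rmax t (0 - t).
Definition rdiv (a b : R) : R := if Req_EM_T b 0 then 0 else a / b.
Definition sq (t : R) : R := t * t.

Lemma rmaxE a b : rmax a b = Rmax a b.
Proof. unfold rmax, if_lt, Rmax. destruct (Rlt_dec a b), (Rle_dec a b); lra. Qed.

Lemma rminE a b : rmin a b = Rmin a b.
Proof. unfold rmin, if_lt, Rmin. destruct (Rlt_dec b a), (Rle_dec a b); lra. Qed.

Lemma rabsE t : rabs t = Rabs t.
Proof.
  unfold rabs. rewrite rmaxE. unfold Rmax, Rabs.
  destruct (Rle_dec t (0 - t)), (Rcase_abs t); lra.
Qed.

Lemma rmax_cases a b : rmax a b = a \/ rmax a b = b.
Proof. unfold rmax, if_lt. destruct (Rlt_dec a b); auto. Qed.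

Lemma rdivE a b : b <> 0 -> rdiv a b = a / b.
Proof. intros Hb. unfold rdiv. destruct (Req_EM_T b 0); [contradiction | auto]. Qed.

Lemma rmax_l a b : a <= rmax a b.
Proof. rewrite rmaxE. apply Rmax_l. Qed.

Lemma rmax_r a b : b <= rmax a b.
Proof. rewrite rmaxE. apply Rmax_r. Qed.

Lemma rmax_lub a b c : a <= c -> b <= c -> rmax a b <= c.
Proof. rewrite rmaxE. apply Rmax_lub. Qed.

Lemma rmax_le_l a b c : a <= b -> a <= rmax b c.
Proof. intros. eapply Rle_trans; [eassumption | apply rmax_l]. Qed.

Lemma rmax_le_r a b c : a <= c -> a <= rmax b c.
Proof. intros. eapply Rle_trans; [eassumption | apply rmax_r]. Qed.

Lemma Rmult_rmax_l c a b : 0 <= c -> c * rmax a b = rmax (c * a) (c * b).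
Proof. intros. rewrite !rmaxE. unfold Rmax. destruct (Rle_dec a b), (Rle_dec (c * a) (c * b)); nra. Qed.

Lemma sq_ge0 t : 0 <= sq t.
Proof. apply Rle_0_sqr. Qed.

Lemma sq_le_max_ends p q t : p <= t <= q -> sq t <= Rmax (sq p) (sq q).
Proof.
  intros. unfold sq, Rmax. destruct (Rle_dec (p * p) (q * q)), (Rle_dec 0 t); nra.
Qed.

Lemma sumR_ext n g h : (forall i, (i < n)%nat -> g i = h i) -> sumR n g = sumR n h.
Proof. induction n; simpl; intros E; auto. rewrite IHn, E; auto. Qed.

Lemma sumR_add n g h : sumR n (fun i => g i + h i) = sumR n g + sumR n h.
Proof. induction n; simpl; [lra |]. rewrite IHn. lra. Qed.

Lemma sumR_sub n g h : sumR n (fun i => g i - h i) = sumR n g - sumR n h.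
Proof. induction n; simpl; [lra |]. rewrite IHn. lra. Qed.

Lemma sumR_scal n c g : sumR n (fun i => c * g i) = c * sumR n g.
Proof. induction n; simpl; [lra |]. rewrite IHn. lra. Qed.

Lemma sumR_const n c : sumR n (fun _ => c) = INR n * c.
Proof. induction n; simpl sumR; [simpl; lra |]. rewrite IHn, S_INR. lra. Qed.

Lemma sumR_le n g h : (forall i, (i < n)%nat -> g i <= h i) -> sumR n g <= sumR n h.
Proof.
  induction n; simpl; intros E; [lra |].
  specialize (IHn ltac:(auto)). specialize (E n ltac:(lia)). lra.
Qed.

Lemma sumR_change_one n g h j : (j < n)%nat ->
  (forall i, (i < n)%nat -> i <> j -> g i = h i) -> sumR n h = sumR n g - g j + h j.
Proof.
  induction n; intros Hj E; [lia |]. simpl.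
  destruct (Nat.eq_dec j n) as [-> | Hjn].
  - rewrite (sumR_ext n h g) by (intros; symmetry; apply E; lia). lra.
  - rewrite IHn by (auto with arith || lia). rewrite (E n) by lia. lra.
Qed.

Definition sum_on (n : nat) (D : nat -> bool) (v : nat -> R) : R :=
  sumR n (fun i => if D i then v i else 0).

Fixpoint card_on (n : nat) (D : nat -> bool) : nat :=
  match n with O => O | S m => (card_on m D + (if D m then 1 else 0))%nat end.

Definition set_bit (D : nat -> bool) (m : nat) (b : bool) : nat -> bool :=
  fun i => if Nat.eqb i m then b else D i.

Lemma card_on_ext n D E : (forall i, (i < n)%nat -> D i = E i) -> card_on n D = card_on n E.
Proof. induction n; simpl; intros H; auto. rewrite IHn, H; auto. Qed.

Lemma sum_on_ext n D E v : (forall i, (i < n)%nat -> D i = E i) -> sum_on n D v = sum_on n E v.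
Proof. intros H. apply sumR_ext. intros i Hi. now rewrite H. Qed.

Lemma card_on_le n D : (card_on n D <= n)%nat.
Proof. induction n; simpl; auto. destruct (D n); lia. Qed.

Lemma card_on_INR n D : INR (card_on n D) = sumR n (fun i => if D i then 1 else 0).
Proof.
  induction n; simpl card_on; simpl sumR; auto.
  rewrite plus_INR, IHn. destruct (D n); simpl; lra.
Qed.

Lemma card_on_lt_of_miss n D j : (j < n)%nat -> D j = false -> (card_on n D < n)%nat.
Proof.
  induction n; intros Hj Dj; [lia |]. simpl. pose proof (card_on_le n D).
  destruct (Nat.eq_dec j n) as [-> | Hjn].
  - rewrite Dj. lia.
  - specialize (IHn ltac:(lia) Dj). destruct (D n); lia.
Qed.

Lemma set_bit_other D m b i : i <> m -> set_bit D m b i = D i.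
Proof. intros H. unfold set_bit. destruct (Nat.eqb_spec i m); [contradiction | auto]. Qed.

Lemma set_bit_same D m b : set_bit D m b m = b.
Proof. unfold set_bit. now rewrite Nat.eqb_refl. Qed.

Lemma card_on_set_bit n D m b : (m < n)%nat ->
  (card_on n (set_bit D m b) + (if D m then 1 else 0) = card_on n D + (if b then 1 else 0))%nat.
Proof.
  induction n; intros Hm; [lia |]. simpl.
  destruct (Nat.eq_dec m n) as [-> | Hmn].
  - rewrite set_bit_same.
    rewrite (card_on_ext n (set_bit D n b) D) by (intros; apply set_bit_other; lia).
    destruct b, (D n); lia.
  - rewrite set_bit_other by lia. specialize (IHn ltac:(lia)).
    destruct (D n), (D m), b; lia.
Qed.

Lemma sum_on_set_bit n D m b v : (m < n)%nat ->
  sum_on n (set_bit D m b) v + (if D m then v m else 0) = sum_on n D v + (if b then v m else 0).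
Proof.
  intros Hm. unfold sum_on.
  rewrite (sumR_change_one n (fun i => if D i then v i else 0)
             (fun i => if set_bit D m b i then v i else 0) m Hm).
  - rewrite set_bit_same. lra.
  - intros i _ Him. now rewrite set_bit_other.
Qed.

Lemma set_bit_last n D b v :
  card_on (S n) (set_bit D n b) = (card_on n D + if b then 1 else 0)%nat /\
  sum_on (S n) (set_bit D n b) v = sum_on n D v + if b then v n else 0.
Proof.
  assert (E : forall i, (i < n)%nat -> set_bit D n b i = D i)
    by (intros; apply set_bit_other; lia).
  split.
  - simpl. now rewrite (card_on_ext n _ D E), set_bit_same.
  - unfold sum_on. simpl. fold (sum_on n (set_bit D n b) v). fold (sum_on n D v).
    now rewrite (sum_on_ext n _ D v E), set_bit_same.
Qed.

Lemma sum_on_bounds n D y a b : (forall i, (i < n)%nat -> D i = true -> a <= y i <= b) ->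
  INR (card_on n D) * a <= sum_on n D y <= INR (card_on n D) * b.
Proof.
  unfold sum_on. induction n; intros H; simpl; [lra |].
  specialize (IHn ltac:(auto)). rewrite plus_INR.
  destruct (D n) eqn:Dn; simpl; [specialize (H n ltac:(lia) Dn) |]; lra.
Qed.

Lemma sum_on_const n D c v : sum_on n D (fun i => if D i then c else v i) = INR (card_on n D) * c.
Proof.
  destruct (sum_on_bounds n D (fun i => if D i then c else v i) c c); [| lra].
  intros i _ Di. rewrite Di. lra.
Qed.

Lemma card_on_lt_witness n D E : (card_on n E < card_on n D)%nat ->
  exists d, (d < n)%nat /\ D d = true /\ E d = false.
Proof.
  induction n; simpl; intros Hlt; [lia |].
  destruct (D n) eqn:Dn, (E n) eqn:En;
    try (exists n; auto; fail);
    destruct IHn as [d Hd]; try lia; exists d; intuition lia.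
Qed.

(** * Largest sums of k entries *)

Fixpoint best_sum (v : nat -> R) (i : nat) : nat -> R :=
  match i with
  | O => fun _ => 0
  | S i' => fun k => if Nat.eqb k 0 then best_sum v i' 0
                     else if Nat.eqb k (S i') then best_sum v i' i' + v i'
                     else rmax (best_sum v i' k) (best_sum v i' (k - 1) + v i')
  end.

Lemma best_sum_0 v i : best_sum v (S i) 0 = best_sum v i 0.
Proof. reflexivity. Qed.

Lemma best_sum_top v i : best_sum v (S i) (S i) = best_sum v i i + v i.
Proof. cbn [best_sum Nat.eqb]. now rewrite Nat.eqb_refl. Qed.

Lemma best_sum_mid v i k : k <> 0%nat -> k <> S i ->
  best_sum v (S i) k = rmax (best_sum v i k) (best_sum v i (k - 1) + v i).
Proof.
  intros. cbn [best_sum].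
  destruct (Nat.eqb_spec k 0), (Nat.eqb_spec k (S i)); auto; lia.
Qed.

Lemma best_sum_all v i : best_sum v i i = sumR i v.
Proof. induction i; [reflexivity |]. now rewrite best_sum_top, IHi. Qed.

Lemma best_sum_ge v i D : sum_on i D v <= best_sum v i (card_on i D).
Proof.
  induction i. { unfold sum_on; simpl; lra. }
  unfold sum_on in *; cbn [card_on sumR]. pose proof (card_on_le i D).
  destruct (D i).
  - replace (card_on i D + 1)%nat with (S (card_on i D)) by lia.
    destruct (Nat.eq_dec (card_on i D) i) as [Ei | Ei].
    + rewrite Ei in *. rewrite best_sum_top. lra.
    + rewrite best_sum_mid by lia. rewrite Nat.sub_succ, Nat.sub_0_r.
      apply rmax_le_r. lra.
  - rewrite Nat.add_0_r. destruct (Nat.eq_dec (card_on i D) 0) as [E0 | E0].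
    + rewrite E0 in *. rewrite best_sum_0. lra.
    + rewrite best_sum_mid by lia. apply rmax_le_l. lra.
Qed.

Lemma best_sum_attained v i k : (k <= i)%nat ->
  exists D, card_on i D = k /\ sum_on i D v = best_sum v i k.
Proof.
  revert k. induction i; intros k Hk.
  - exists (fun _ : nat => false). split; [simpl; lia | reflexivity].
  - assert (Ext : forall k' (b : bool), (k' <= i)%nat ->
                  best_sum v (S i) k = best_sum v i k' + (if b then v i else 0) ->
                  k = (k' + if b then 1 else 0)%nat ->
                  exists D, card_on (S i) D = k /\ sum_on (S i) D v = best_sum v (S i) k).
    { intros k' b Hk' Eb Ek. destruct (IHi k' Hk') as [D [Dc Ds]].
      exists (set_bit D i b). destruct (set_bit_last i D b v) as [Hc Hs].
      rewrite Hc, Hs, Dc, Ds, Eb. auto. }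
    destruct (Nat.eq_dec k 0) as [-> | K0].
    { apply (Ext 0%nat false); [lia | rewrite best_sum_0; ring | lia]. }
    destruct (Nat.eq_dec k (S i)) as [-> | Ki].
    { apply (Ext i true); [lia | rewrite best_sum_top; ring | lia]. }
    rewrite best_sum_mid in * by auto.
    destruct (rmax_cases (best_sum v i k) (best_sum v i (k - 1) + v i)) as [M | M].
    + apply (Ext k false); [lia | rewrite M; ring | lia].
    + apply (Ext (k - 1)%nat true); [lia | now rewrite M | lia].
Qed.

(* Largest sum of [k] values among [v 0 .. v (n-1)] avoiding index [j]: either
   the best [k] avoid [j], or [j] is among the best [k+1]. *)
Definition best_sum_without (v : nat -> R) (n j k : nat) : R :=
  rmin (best_sum v n k) (best_sum v n (k + 1) - v j).

Lemma best_sum_without_ge v n j D : (j < n)%nat -> D j = false ->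
  sum_on n D v <= best_sum_without v n j (card_on n D).
Proof.
  intros Hj Dj. unfold best_sum_without. rewrite rminE. apply Rmin_glb.
  - apply best_sum_ge.
  - pose proof (card_on_set_bit n D j true Hj) as Hc.
    pose proof (sum_on_set_bit n D j true v Hj) as Hs.
    pose proof (best_sum_ge v n (set_bit D j true)) as Hb.
    rewrite Dj in Hc, Hs.
    replace (card_on n (set_bit D j true)) with (card_on n D + 1)%nat in Hb by lia.
    lra.
Qed.

Lemma best_sum_without_attained v n j k : (j < n)%nat -> (k < n)%nat ->
  exists D, D j = false /\ card_on n D = k /\ sum_on n D v = best_sum_without v n j k.
Proof.
  intros Hj Hk.
  enough (Hle : exists D, D j = false /\ card_on n D = k /\ best_sum_without v n j k <= sum_on n D v).
  { destruct Hle as [D [Dj [Dc Ds]]]. exists D. repeat split; auto.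
    pose proof (best_sum_without_ge v n j D Hj Dj). subst k. lra. }
  destruct (best_sum_attained v n k ltac:(lia)) as [E [Ec Es]].
  destruct (best_sum_attained v n (k + 1) ltac:(lia)) as [F [Fc Fs]].
  unfold best_sum_without. rewrite rminE.
  destruct (F j) eqn:Fj.
  - exists (set_bit F j false).
    pose proof (card_on_set_bit n F j false Hj) as Fc1.
    pose proof (sum_on_set_bit n F j false v Hj) as Fs1.
    rewrite Fj in Fc1, Fs1. split; [apply set_bit_same |]. split; [lia |].
    eapply Rle_trans; [apply Rmin_r | lra].
  - destruct (E j) eqn:Ej.
    + (* swap [j] in a best [k]-set for an index [d] of a best [k+1]-set avoiding [j] *)
      destruct (card_on_lt_witness n F E ltac:(lia)) as [d [Hd [Fd Ed]]].
      assert (dj : d <> j) by congruence.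
      exists (set_bit (set_bit E j false) d true).
      pose proof (card_on_set_bit n E j false Hj) as Ec1.
      pose proof (sum_on_set_bit n E j false v Hj) as Es1.
      pose proof (card_on_set_bit n (set_bit E j false) d true Hd) as Ec2.
      pose proof (sum_on_set_bit n (set_bit E j false) d true v Hd) as Es2.
      pose proof (card_on_set_bit n F d false Hd) as Fc1.
      pose proof (sum_on_set_bit n F d false v Hd) as Fs1.
      pose proof (best_sum_ge v n (set_bit F d false)) as Fbest.
      rewrite set_bit_other in Ec2, Es2 by auto. rewrite Ej, Ed, Fd in *.
      replace (card_on n (set_bit F d false)) with k in Fbest by lia.
      split; [rewrite set_bit_other, set_bit_same; auto |]. split; [lia |].
      eapply Rle_trans; [apply Rmin_r | lra].
    + exists E. repeat split; auto. eapply Rle_trans; [apply Rmin_l | lra].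
Qed.

Definition opp_seq (x : nat -> R) : nat -> R := fun i => 0 - x i.

Lemma sum_on_opp_seq n D x : sum_on n D (opp_seq x) = - sum_on n D x.
Proof. unfold sum_on, opp_seq. induction n; simpl; [lra |]. rewrite IHn. destruct (D n); lra. Qed.

Definition worst_sum_without (x : nat -> R) (n j k : nat) : R :=
  rmax (0 - best_sum (opp_seq x) n k) (0 - best_sum (opp_seq x) n (k + 1) - x j).

Lemma worst_sum_withoutE x n j k :
  worst_sum_without x n j k = - best_sum_without (opp_seq x) n j k.
Proof.
  unfold worst_sum_without, best_sum_without. rewrite rmaxE, rminE. unfold opp_seq, Rmax, Rmin.
  destruct (Rle_dec _ _), (Rle_dec _ _); lra.
Qed.

Lemma worst_sum_without_le x n j D : (j < n)%nat -> D j = false ->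
  worst_sum_without x n j (card_on n D) <= sum_on n D x.
Proof.
  intros Hj Dj. rewrite worst_sum_withoutE.
  pose proof (best_sum_without_ge (opp_seq x) n j D Hj Dj) as H.
  rewrite sum_on_opp_seq in H. lra.
Qed.

Lemma worst_sum_without_attained x n j k : (j < n)%nat -> (k < n)%nat ->
  exists D, D j = false /\ card_on n D = k /\ sum_on n D x = worst_sum_without x n j k.
Proof.
  intros Hj Hk. destruct (best_sum_without_attained (opp_seq x) n j k Hj Hk) as [D [Dj [Dc Ds]]].
  exists D. repeat split; auto. rewrite worst_sum_withoutE, <- Ds, sum_on_opp_seq. ring.
Qed.

(** * Variance, Hamming distance and the change of one entry *)

Lemma variance_sum_sq n y : INR n <> 0 ->
  variance n y = (sumR n (fun i => y i * y i) - sumR n y * sumR n y / INR n) / INR n.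
Proof.
  intros Hn. unfold variance, mean. set (m := sumR n y / INR n).
  rewrite (sumR_ext n _ (fun i => y i * y i + ((-2 * m) * y i + m * m))) by (intros; simpl; ring).
  rewrite sumR_add, sumR_add, sumR_scal, sumR_const. unfold m. field. auto.
Qed.

Lemma variance_1 y : variance 1 y = 0.
Proof. unfold variance, mean. simpl. field. Qed.

Lemma variance_change_one n y z j : (2 <= n)%nat -> (j < n)%nat ->
  (forall i, (i < n)%nat -> i <> j -> y i = z i) ->
  let m := (sumR n y - y j) / (INR n - 1) in
  variance n y - variance n z = (INR n - 1) / (INR n * INR n) * (sq (y j - m) - sq (z j - m)).
Proof.
  intros Hn Hj E m.
  assert (H2 : 2 <= INR n) by (replace 2 with (INR 2) by (simpl; lra); apply le_INR; auto).
  rewrite (variance_sum_sq n y), (variance_sum_sq n z) by lra.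
  rewrite (sumR_change_one n y z j Hj E).
  rewrite (sumR_change_one n (fun i => y i * y i) (fun i => z i * z i) j Hj)
    by (intros; rewrite E; auto).
  unfold m, sq. field. lra.
Qed.

Lemma dist_INR n x y :
  INR (dist n x y) = sumR n (fun i => if Req_EM_T (x i) (y i) then 0 else 1).
Proof.
  induction n; simpl dist; simpl sumR; auto.
  rewrite plus_INR, IHn. destruct (Req_EM_T (x n) (y n)); simpl; lra.
Qed.

Lemma dist_0_eq n x y : dist n x y = 0%nat -> forall i, (i < n)%nat -> x i = y i.
Proof.
  induction n; simpl; intros H0 i Hi; [lia |].
  destruct (Req_EM_T (x n) (y n)); [| lia].
  destruct (Nat.eq_dec i n) as [-> | Hin]; auto. apply IHn; lia.
Qed.

Lemma dist_1_inv n y z : dist n y z = 1%nat ->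
  exists j, (j < n)%nat /\ forall i, (i < n)%nat -> i <> j -> y i = z i.
Proof.
  induction n; simpl; intros H1; [lia |]. destruct (Req_EM_T (y n) (z n)) as [Eyz | Eyz].
  - destruct IHn as [j [Hj E]]; [lia |]. exists j. split; [lia |].
    intros i Hi Hij. destruct (Nat.eq_dec i n) as [-> | Hin]; auto. apply E; lia.
  - exists n. split; [lia |]. intros i Hi Hin. apply dist_0_eq with n; lia.
Qed.

Lemma dist_le_card_on n x y E : (forall i, (i < n)%nat -> E i = false -> x i = y i) ->
  (dist n x y <= card_on n E)%nat.
Proof.
  induction n; simpl; intros H; auto.
  specialize (IHn ltac:(auto)). destruct (E n) eqn:En.
  - destruct (Req_EM_T (x n) (y n)); lia.
  - rewrite (H n) by auto. destruct (Req_EM_T (y n) (y n)); [lia | congruence].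
Qed.

Lemma dist_updR n y j b : (j < n)%nat -> b <> y j -> dist n y (updR y j b) = 1%nat.
Proof.
  intros Hj Hb. apply INR_eq. rewrite dist_INR. simpl INR.
  rewrite (sumR_change_one n (fun _ => 0) _ j Hj).
  - rewrite sumR_const. unfold updR. rewrite Nat.eqb_refl.
    destruct (Req_EM_T (y j) b); [congruence | lra].
  - intros i _ Hij. unfold updR. destruct (Nat.eqb_spec i j); [lia |].
    destruct (Req_EM_T (y i) (y i)); [auto | congruence].
Qed.

Definition changed_except (x y : nat -> R) (j : nat) : nat -> bool :=
  fun i => andb (negb (Nat.eqb i j)) (if Req_EM_T (x i) (y i) then false else true).

Lemma changed_except_at x y j : changed_except x y j j = false.
Proof. unfold changed_except. now rewrite Nat.eqb_refl. Qed.

Lemma changed_except_false x y j i : changed_except x y j i = false -> i <> j -> y i = x i.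
Proof.
  unfold changed_except. intros Hc Hij. destruct (Nat.eqb_spec i j); [lia |].
  destruct (Req_EM_T (x i) (y i)); [auto | discriminate].
Qed.

Lemma dist_split n x y j : (j < n)%nat ->
  INR (dist n x y) = (if Req_EM_T (x j) (y j) then 0 else 1) + INR (card_on n (changed_except x y j)).
Proof.
  intros Hj. rewrite dist_INR, card_on_INR.
  rewrite (sumR_change_one n (fun i => if changed_except x y j i then 1 else 0) _ j Hj).
  - rewrite changed_except_at. lra.
  - intros i _ Hij. unfold changed_except. destruct (Nat.eqb_spec i j); [lia |].
    simpl. destruct (Req_EM_T (x i) (y i)); auto.
Qed.

Lemma inbox_updR n L U y j b : inbox n L U y -> L <= b <= U -> inbox n L U (updR y j b).
Proof. intros H Hb i Hi. unfold updR. destruct (Nat.eqb i j); auto. Qed.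

(* [gap a b e] is, up to the factor (n-1)/n^2, the change of variance when an
   entry [a] is replaced by [b] while the other entries have mean [e]. *)
Definition gap (a b e : R) : R := rabs (sq (a - e) - sq (b - e)).

(* The largest [gap a b e] over [b] in [L, U] (the middle term is [b = e]). *)
Definition gap_fixed (L U a e : R) : R := rmax (rmax (gap a L e) (gap a U e)) (sq (a - e)).

(* The largest [gap a b e] over [a, b] in [L, U]. *)
Definition gap_free (L U e : R) : R := rmax (sq (L - e)) (sq (U - e)).

Lemma gapE a b e : gap a b e = Rabs (sq (a - e) - sq (b - e)).
Proof. apply rabsE. Qed.

Lemma gap_ge0 a b e : 0 <= gap a b e.
Proof. rewrite gapE. apply Rabs_pos. Qed.

Lemma gap_same_l a e : gap a e e = sq (a - e).
Proof.
  rewrite gapE. unfold sq at 2. replace ((e - e) * (e - e)) with 0 by ring.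
  rewrite Rminus_0_r. apply Rabs_pos_eq, sq_ge0.
Qed.

Lemma gap_same_r e b : gap e b e = sq (b - e).
Proof.
  rewrite gapE. unfold sq at 1. replace ((e - e) * (e - e)) with 0 by ring.
  rewrite Rminus_0_l, Rabs_Ropp. apply Rabs_pos_eq, sq_ge0.
Qed.

Ltac case_max_abs :=
  unfold Rmax, Rabs in *;
  repeat match goal with
  | H : context [Rle_dec ?a ?b] |- _ => destruct (Rle_dec a b)
  | |- context [Rle_dec ?a ?b] => destruct (Rle_dec a b)
  | H : context [Rcase_abs ?a] |- _ => destruct (Rcase_abs a)
  | |- context [Rcase_abs ?a] => destruct (Rcase_abs a)
  end.

Lemma gap_le_fixed L U a b e : L <= b <= U -> gap a b e <= gap_fixed L U a e.
Proof.
  intros Hb. unfold gap_fixed. rewrite !rmaxE, !gapE.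
  pose proof (sq_le_max_ends (L - e) (U - e) (b - e) ltac:(lra)).
  pose proof (sq_ge0 (a - e)). pose proof (sq_ge0 (b - e)).
  case_max_abs; lra.
Qed.

Lemma gap_le_free L U a b e : L <= a <= U -> L <= b <= U -> gap a b e <= gap_free L U e.
Proof.
  intros Ha Hb. unfold gap_free. rewrite !rmaxE, !gapE.
  pose proof (sq_le_max_ends (L - e) (U - e) (b - e) ltac:(lra)).
  pose proof (sq_le_max_ends (L - e) (U - e) (a - e) ltac:(lra)).
  pose proof (sq_ge0 (a - e)). pose proof (sq_ge0 (b - e)).
  case_max_abs; lra.
Qed.

Lemma gap_fixed_ge0 L U a e : 0 <= gap_fixed L U a e.
Proof. unfold gap_fixed. apply rmax_le_r, sq_ge0. Qed.

Lemma gap_free_ge0 L U e : 0 <= gap_free L U e.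
Proof. unfold gap_free. apply rmax_le_l, sq_ge0. Qed.

Lemma gap_free_le L U e : L <= e <= U -> gap_free L U e <= sq (U - L).
Proof. intros. unfold gap_free, sq. rewrite rmaxE. apply Rmax_lub; nra. Qed.

Lemma Rabs_affine_le_ends c d lo hi e : lo <= e <= hi ->
  Rabs (c * e + d) <= Rmax (Rabs (c * lo + d)) (Rabs (c * hi + d)).
Proof.
  intros. destruct (Rle_dec 0 c).
  - assert (c * lo <= c * e) by (apply Rmult_le_compat_l; lra).
    assert (c * e <= c * hi) by (apply Rmult_le_compat_l; lra). case_max_abs; lra.
  - assert (c * e <= c * lo) by nra. assert (c * hi <= c * e) by nra. case_max_abs; lra.
Qed.

(* As functions of the mean [e], [gap a b e] is the absolute value of an affine
   function and [sq (a - e)] is convex: their maxima over an interval are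
   attained at its ends. *)
Lemma gap_le_ends a b lo hi e : lo <= e <= hi -> gap a b e <= Rmax (gap a b lo) (gap a b hi).
Proof.
  intros He. rewrite !gapE. unfold sq.
  replace ((a - e) * (a - e) - (b - e) * (b - e)) with (2 * (b - a) * e + (a * a - b * b)) by ring.
  replace ((a - lo) * (a - lo) - (b - lo) * (b - lo)) with (2 * (b - a) * lo + (a * a - b * b)) by ring.
  replace ((a - hi) * (a - hi) - (b - hi) * (b - hi)) with (2 * (b - a) * hi + (a * a - b * b)) by ring.
  now apply Rabs_affine_le_ends.
Qed.

Lemma sq_sub_le_ends a lo hi e : lo <= e <= hi -> sq (a - e) <= Rmax (sq (a - lo)) (sq (a - hi)).
Proof. intros. rewrite Rmax_comm. apply sq_le_max_ends. lra. Qed.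

Lemma gap_fixed_le_ends L U a lo hi e : lo <= e <= hi ->
  gap_fixed L U a e <= rmax (gap_fixed L U a lo) (gap_fixed L U a hi).
Proof.
  intros He. pose proof (gap_le_ends a L lo hi e He). pose proof (gap_le_ends a U lo hi e He).
  pose proof (sq_sub_le_ends a lo hi e He). unfold gap_fixed in *. rewrite !rmaxE in *.
  case_max_abs; lra.
Qed.

Lemma gap_free_le_ends L U lo hi e : lo <= e <= hi ->
  gap_free L U e <= rmax (gap_free L U lo) (gap_free L U hi).
Proof.
  intros He. pose proof (sq_sub_le_ends L lo hi e He). pose proof (sq_sub_le_ends U lo hi e He).
  unfold gap_free in *. rewrite !rmaxE in *. case_max_abs; lra.
Qed.

(** * The smooth sensitivity in closed form *)

(* After [k] entries other than [j] have been changed, the mean of the entries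
   other than [j] is smallest when the [k] largest of them are moved to [L]
   and largest when the [k] smallest are moved to [U]. *)
Definition mean_lo (n : nat) (L : R) (x : nat -> R) (j k : nat) : R :=
  rdiv (best_sum x n n - x j - best_sum_without x n j k + INR k * L) (INR (n - 1)).

Definition mean_hi (n : nat) (U : R) (x : nat -> R) (j k : nat) : R :=
  rdiv (best_sum x n n - x j - worst_sum_without x n j k + INR k * U) (INR (n - 1)).

Definition decay (beta : R) (k : nat) : R := exp (0 - beta * INR k).

(* Entry [j] is kept (distance [k], bound [gap_fixed]) or changed as well
   (distance [k + 1], bound [gap_free]). *)
Definition candidate (n : nat) (L U beta : R) (x : nat -> R) (j k : nat) : R :=
  rmax (rmax (decay beta k * gap_fixed L U (x j) (mean_lo n L x j k))
             (decay beta k * gap_fixed L U (x j) (mean_hi n U x j k)))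
       (rmax (decay beta (k + 1) * gap_free L U (mean_lo n L x j k))
             (decay beta (k + 1) * gap_free L U (mean_hi n U x j k))).

Fixpoint max_candidate_upto (n : nat) (L U beta : R) (x : nat -> R) (a : R) (j k : nat) : R :=
  match k with
  | O => a
  | S k' => rmax (max_candidate_upto n L U beta x a j k') (candidate n L U beta x j k')
  end.

Fixpoint max_candidate (n : nat) (L U beta : R) (x : nat -> R) (j : nat) : R :=
  match j with
  | O => 0
  | S j' => max_candidate_upto n L U beta x (max_candidate n L U beta x j') j' n
  end.

Definition var_scale (n : nat) : R := rdiv (INR (n - 1)) (INR (n * n)).

Definition smooth_sens (n : nat) (L U beta : R) (x : nat -> R) : R :=
  var_scale n * max_candidate n L U beta x n.

Section SmoothSensitivity.
Variables (n : nat) (L U beta : R) (x : nat -> R).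

Notation cand := (candidate n L U beta x).
Notation max_upto := (max_candidate_upto n L U beta x).
Notation max_cand := (max_candidate n L U beta x).

Lemma max_upto_ge_init a j k : a <= max_upto a j k.
Proof. induction k; simpl; [lra |]. now apply rmax_le_l. Qed.

Lemma max_upto_ge_cand a j k k' : (k' < k)%nat -> cand j k' <= max_upto a j k.
Proof.
  induction k; intros Hk; [lia |]. simpl.
  destruct (Nat.eq_dec k' k) as [-> | Hkk]; [apply rmax_r |].
  apply rmax_le_l, IHk. lia.
Qed.

Lemma max_cand_mono j1 j2 : (j1 <= j2)%nat -> max_cand j1 <= max_cand j2.
Proof. induction 1; [lra |]. simpl. eapply Rle_trans; [apply IHle | apply max_upto_ge_init]. Qed.

Lemma cand_le_max_cand j k : (j < n)%nat -> (k < n)%nat -> cand j k <= max_cand n.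
Proof.
  intros Hj Hk. eapply Rle_trans; [| apply (max_cand_mono (S j) n); lia].
  now apply max_upto_ge_cand.
Qed.

Lemma max_upto_attained a j k :
  max_upto a j k = a \/ exists k', (k' < k)%nat /\ max_upto a j k = cand j k'.
Proof.
  induction k; simpl; auto.
  destruct (rmax_cases (max_upto a j k) (cand j k)) as [M | M]; rewrite M.
  - destruct IHk as [? | [k' [? ?]]]; auto. right. exists k'. split; auto; lia.
  - right. exists k. split; auto.
Qed.

Lemma max_cand_attained j :
  max_cand j = 0 \/ exists j' k, (j' < j)%nat /\ (k < n)%nat /\ max_cand j = cand j' k.
Proof.
  induction j; simpl; auto.
  destruct (max_upto_attained (max_cand j) j n) as [M | [k [Hk M]]]; rewrite M.
  - destruct IHj as [? | [j' [k [? [? ?]]]]]; auto. right. exists j', k. repeat split; auto; lia.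
  - right. exists j, k. repeat split; auto.
Qed.

Hypotheses (Hn : (2 <= n)%nat) (HLU : L < U) (Hbeta : 0 < beta) (Hx : inbox n L U x).

Let coef := (INR n - 1) / (INR n * INR n).

Lemma INR_n_ge2 : 2 <= INR n.
Proof. replace 2 with (INR 2) by (simpl; lra). now apply le_INR. Qed.

Lemma INR_n_pred : INR (n - 1) = INR n - 1.
Proof. rewrite minus_INR by lia. reflexivity. Qed.

Lemma coef_ge0 : 0 <= coef.
Proof.
  pose proof INR_n_ge2. unfold coef. apply Rmult_le_pos; [lra |].
  left. apply Rinv_0_lt_compat. nra.
Qed.

Lemma var_scaleE : var_scale n = coef.
Proof.
  pose proof INR_n_ge2. unfold var_scale, coef.
  rewrite INR_n_pred, mult_INR, rdivE by nra. reflexivity.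
Qed.

Definition mean_others (y : nat -> R) (j : nat) : R := (sumR n y - y j) / (INR n - 1).

Lemma others_sum_bounds y j : inbox n L U y -> (j < n)%nat ->
  (INR n - 1) * L <= sumR n y - y j <= (INR n - 1) * U.
Proof.
  intros Hy Hj.
  assert (Hupd : forall c, sumR n (updR y j c) = sumR n y - y j + c).
  { intros c. rewrite (sumR_change_one n y (updR y j c) j Hj).
    - unfold updR. now rewrite Nat.eqb_refl.
    - intros i _ Hij. unfold updR. destruct (Nat.eqb_spec i j); [lia | auto]. }
  assert (Hbox : forall c, L <= c <= U ->
            sumR n (fun _ => L) <= sumR n (updR y j c) <= sumR n (fun _ => U)).
  { intros c Hc. pose proof (inbox_updR n L U y j c Hy Hc) as Hyc.
    split; apply sumR_le; intros i Hi; apply Hyc; auto. }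
  rewrite !sumR_const in Hbox.
  pose proof (Hbox L ltac:(lra)). pose proof (Hbox U ltac:(lra)). rewrite !Hupd in *. lra.
Qed.

Lemma mean_others_bounds y j : inbox n L U y -> (j < n)%nat -> L <= mean_others y j <= U.
Proof.
  intros Hy Hj. pose proof (others_sum_bounds y j Hy Hj). pose proof INR_n_ge2. unfold mean_others.
  split; apply Rmult_le_reg_r with (INR n - 1); try lra; field_simplify; lra.
Qed.

Lemma LS_change_one y z j : (j < n)%nat -> (forall i, (i < n)%nat -> i <> j -> y i = z i) ->
  Rabs (variance n y - variance n z) = coef * gap (y j) (z j) (mean_others y j).
Proof.
  intros Hj E. rewrite (variance_change_one n y z j Hn Hj E).
  rewrite Rabs_mult, Rabs_pos_eq by apply coef_ge0. now rewrite gapE.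
Qed.

Lemma LSset_inv y w : inbox n L U y -> LSset n L U y w ->
  exists j b, (j < n)%nat /\ L <= b <= U /\ w = coef * gap (y j) b (mean_others y j).
Proof.
  intros Hy [z [Hz [Hd ->]]]. destruct (dist_1_inv n y z Hd) as [j [Hj E]].
  exists j, (z j). repeat split; try apply Hz; auto. now apply LS_change_one.
Qed.

Lemma LSset_bounds y w : inbox n L U y -> LSset n L U y w -> 0 <= w <= coef * sq (U - L).
Proof.
  intros Hy Hw. destruct (LSset_inv y w Hy Hw) as [j [b [Hj [Hb ->]]]].
  pose proof coef_ge0. pose proof (gap_ge0 (y j) b (mean_others y j)).
  pose proof (gap_le_free L U (y j) b (mean_others y j) (Hy j Hj) Hb).
  pose proof (gap_free_le L U (mean_others y j) (mean_others_bounds y j Hy Hj)).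
  split; [nra |]. apply Rmult_le_compat_l; lra.
Qed.

Lemma LSset_nonempty y : inbox n L U y -> exists w, LSset n L U y w.
Proof.
  intros Hy. set (b := if Req_EM_T (y 0%nat) L then U else L).
  assert (Hb : b <> y 0%nat /\ L <= b <= U) by (unfold b; destruct (Req_EM_T (y 0%nat) L); lra).
  eexists. exists (updR y 0 b). split; [apply inbox_updR; tauto |].
  split; [apply dist_updR; [lia | tauto] | reflexivity].
Qed.

Lemma LS_exists y : inbox n L U y -> exists l, is_lub (LSset n L U y) l /\ 0 <= l.
Proof.
  intros Hy. destruct (completeness (LSset n L U y)) as [l Hl].
  - exists (coef * sq (U - L)). intros w Hw. apply (LSset_bounds y w Hy Hw).
  - now apply LSset_nonempty.
  - exists l. split; auto. destruct (LSset_nonempty y Hy) as [w Hw].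
    pose proof (LSset_bounds y w Hy Hw). pose proof (proj1 Hl w Hw). lra.
Qed.

Lemma gap_le_LS y l j b : inbox n L U y -> is_lub (LSset n L U y) l -> 0 <= l ->
  (j < n)%nat -> L <= b <= U -> coef * gap (y j) b (mean_others y j) <= l.
Proof.
  intros Hy Hl Hl0 Hj Hb. destruct (Req_EM_T b (y j)) as [-> | Hbj].
  - rewrite gapE, Rminus_diag, Rabs_R0. lra.
  - apply (proj1 Hl). exists (updR y j b). split; [now apply inbox_updR |].
    split; [now apply dist_updR |].
    rewrite LS_change_one with (j := j); auto.
    + unfold updR. now rewrite Nat.eqb_refl.
    + intros i _ Hij. unfold updR. destruct (Nat.eqb_spec i j); [lia | auto].
Qed.

Lemma others_sum_changed y D j : (j < n)%nat -> D j = false ->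
  (forall i, (i < n)%nat -> D i = false -> i <> j -> y i = x i) ->
  sumR n y - y j = sumR n x - x j - sum_on n D x + sum_on n D y.
Proof.
  intros Hj Dj E.
  assert (Hdrop : forall v, sumR n (updR v j 0) = sumR n v - v j).
  { intros v. rewrite (sumR_change_one n v (updR v j 0) j Hj).
    - unfold updR. rewrite Nat.eqb_refl. ring.
    - intros i _ Hij. unfold updR. destruct (Nat.eqb_spec i j); [lia | auto]. }
  rewrite <- !Hdrop. unfold sum_on. rewrite <- sumR_sub, <- sumR_add.
  apply sumR_ext. intros i Hi. unfold updR.
  destruct (Nat.eqb_spec i j) as [-> | Hij]; [rewrite Dj; ring |].
  destruct (D i) eqn:Di; [ring |]. rewrite E by auto. ring.
Qed.

Lemma mean_others_range y D j : inbox n L U y -> (j < n)%nat -> D j = false ->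
  (forall i, (i < n)%nat -> D i = false -> i <> j -> y i = x i) ->
  mean_lo n L x j (card_on n D) <= mean_others y j <= mean_hi n U x j (card_on n D).
Proof.
  intros Hy Hj Dj E. pose proof INR_n_ge2.
  pose proof (best_sum_without_ge x n j D Hj Dj).
  pose proof (worst_sum_without_le x n j D Hj Dj).
  pose proof (sum_on_bounds n D y L U ltac:(intros; apply Hy; auto)).
  unfold mean_lo, mean_hi, mean_others. rewrite INR_n_pred, best_sum_all, !rdivE by lra.
  rewrite (others_sum_changed y D j Hj Dj E).
  split; apply Rmult_le_compat_r; try (left; apply Rinv_0_lt_compat; lra); lra.
Qed.

Lemma LS_decay_le y w : inbox n L U y -> LSset n L U y w ->
  w * exp (- beta * INR (dist n x y)) <= coef * max_cand n.
Proof.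
  intros Hy Hw. destruct (LSset_inv y w Hy Hw) as [j [b [Hj [Hb ->]]]].
  set (D := changed_except x y j).
  assert (Dj : D j = false) by apply changed_except_at.
  assert (ED : forall i, (i < n)%nat -> D i = false -> i <> j -> y i = x i)
    by (intros i _; apply changed_except_false).
  set (k := card_on n D).
  assert (Hk : (k < n)%nat) by now apply (card_on_lt_of_miss n D j).
  pose proof (dist_split n x y j Hj) as Hd. fold D k in Hd.
  pose proof (mean_others_range y D j Hy Hj Dj ED) as Hm. fold k in Hm.
  pose proof coef_ge0. pose proof (cand_le_max_cand j k Hj Hk).
  rewrite Rmult_assoc. apply Rmult_le_compat_l; auto.
  eapply Rle_trans; [| eassumption]. rewrite Hd. unfold candidate.
  destruct (Req_EM_T (x j) (y j)) as [Exy | Exy].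
  - replace (- beta * (0 + INR k)) with (0 - beta * INR k) by ring. fold (decay beta k).
    pose proof (gap_le_fixed L U (y j) b (mean_others y j) Hb).
    pose proof (gap_fixed_le_ends L U (x j) _ _ _ Hm). rewrite <- Exy in *.
    assert (0 <= decay beta k) by (left; apply exp_pos).
    apply rmax_le_l. rewrite <- Rmult_rmax_l by auto. rewrite Rmult_comm.
    apply Rmult_le_compat_l; lra.
  - replace (- beta * (1 + INR k)) with (0 - beta * INR (k + 1))
      by (rewrite plus_INR; simpl; ring). fold (decay beta (k + 1)).
    pose proof (gap_le_free L U (y j) b (mean_others y j) (Hy j Hj) Hb).
    pose proof (gap_free_le_ends L U _ _ _ Hm).
    assert (0 <= decay beta (k + 1)) by (left; apply exp_pos).
    apply rmax_le_r. rewrite <- Rmult_rmax_l by auto. rewrite Rmult_comm.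
    apply Rmult_le_compat_l; lra.
Qed.

Lemma decay_le_dist k y : (dist n x y <= k)%nat -> decay beta k <= exp (- beta * INR (dist n x y)).
Proof.
  intros Hk. apply le_INR in Hk. unfold decay.
  destruct (Rle_lt_or_eq_dec (0 - beta * INR k) (- beta * INR (dist n x y))) as [Hlt | ->]; [nra | |].
  - now left; apply exp_increasing.
  - lra.
Qed.

Lemma SSset_ge_decay y k g : inbox n L U y -> (dist n x y <= k)%nat -> 0 <= g ->
  (forall l, is_lub (LSset n L U y) l -> 0 <= l -> coef * g <= l) ->
  exists v, SSset n L U beta x v /\ coef * (decay beta k * g) <= v.
Proof.
  intros Hy Hk Hg HLS. destruct (LS_exists y Hy) as [l [Hl Hl0]].
  exists (l * exp (- beta * INR (dist n x y))). split.
  - exists y. split; auto. exists l. split; auto.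
  - replace (coef * _) with (coef * g * decay beta k) by ring.
    pose proof coef_ge0. apply Rmult_le_compat; auto using decay_le_dist.
    + now apply Rmult_le_pos.
    + left; apply exp_pos.
Qed.

(* The witness moves the entries of [D] to [c] and keeps [x j]. *)
Lemma gap_fixed_attained D j c : (j < n)%nat -> D j = false -> L <= c <= U ->
  let e := mean_others (fun i => if D i then c else x i) j in
  exists v, SSset n L U beta x v /\ coef * (decay beta (card_on n D) * gap_fixed L U (x j) e) <= v.
Proof.
  intros Hj Dj Hc e. set (y := fun i => if D i then c else x i). fold y in e.
  assert (Hy : inbox n L U y) by (intros i Hi; unfold y; destruct (D i); auto).
  assert (Hyj : y j = x j) by (unfold y; now rewrite Dj).
  assert (He : L <= e <= U) by now apply mean_others_bounds.
  apply (SSset_ge_decay y); auto using gap_fixed_ge0.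
  - apply dist_le_card_on. intros i _ Di. unfold y. now rewrite Di.
  - intros l Hl Hl0. pose proof coef_ge0.
    unfold gap_fixed. rewrite !Rmult_rmax_l by auto. rewrite <- Hyj, <- gap_same_l.
    repeat apply rmax_lub; apply gap_le_LS; auto; lra.
Qed.

(* The witness moves the entries of [D] to [c] and [x j] to the resulting
   mean [e] of the others, which leaves that mean unchanged. *)
Lemma gap_free_attained D j c : (j < n)%nat -> D j = false -> L <= c <= U ->
  let e := mean_others (fun i => if D i then c else x i) j in
  exists v, SSset n L U beta x v /\ coef * (decay beta (card_on n D + 1) * gap_free L U e) <= v.
Proof.
  intros Hj Dj Hc e. set (y := fun i => if D i then c else x i). fold y in e.
  assert (Hy : inbox n L U y) by (intros i Hi; unfold y; destruct (D i); auto).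
  assert (He : L <= e <= U) by now apply mean_others_bounds.
  set (y' := updR y j e).
  assert (Hy' : inbox n L U y') by now apply inbox_updR.
  assert (Hy'j : y' j = e) by (unfold y', updR; now rewrite Nat.eqb_refl).
  assert (Hm : mean_others y' j = e).
  { unfold e, mean_others. f_equal.
    rewrite (sumR_change_one n y y' j Hj)
      by (intros i _ Hij; unfold y', updR; destruct (Nat.eqb_spec i j); [lia | auto]).
    rewrite Hy'j. ring. }
  apply (SSset_ge_decay y'); auto using gap_free_ge0.
  - pose proof (card_on_set_bit n D j true Hj) as Hc1. rewrite Dj in Hc1.
    enough (dist n x y' <= card_on n (set_bit D j true))%nat by lia.
    apply dist_le_card_on. intros i _ Ei. unfold y', updR, y.
    destruct (Nat.eqb_spec i j) as [-> | Hij]; [now rewrite set_bit_same in Ei |].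
    rewrite set_bit_other in Ei by auto. now rewrite Ei.
  - intros l Hl Hl0. pose proof coef_ge0.
    unfold gap_free. rewrite Rmult_rmax_l by auto.
    rewrite <- (gap_same_r e L), <- (gap_same_r e U). rewrite <- Hy'j at 1 3. rewrite <- Hm.
    apply rmax_lub; apply gap_le_LS; auto; lra.
Qed.

Lemma mean_changed_to j c D : (j < n)%nat -> D j = false ->
  mean_others (fun i => if D i then c else x i) j
  = rdiv (best_sum x n n - x j - sum_on n D x + INR (card_on n D) * c) (INR (n - 1)).
Proof.
  intros Hj Dj. pose proof INR_n_ge2.
  unfold mean_others. rewrite INR_n_pred, rdivE, best_sum_all by lra. f_equal.
  rewrite (others_sum_changed (fun i => if D i then c else x i) D j Hj Dj)
    by (intros i _ Di _; cbv beta; now rewrite Di).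
  now rewrite sum_on_const.
Qed.

Lemma candidate_attained j k : (j < n)%nat -> (k < n)%nat ->
  exists v, SSset n L U beta x v /\ coef * cand j k <= v.
Proof.
  intros Hj Hk.
  destruct (best_sum_without_attained x n j k Hj Hk) as [D1 [D1j [D1c D1s]]].
  destruct (worst_sum_without_attained x n j k Hj Hk) as [D2 [D2j [D2c D2s]]].
  pose proof (mean_changed_to j L D1 Hj D1j) as Hlo.
  pose proof (mean_changed_to j U D2 Hj D2j) as Hhi.
  rewrite D1s, D1c in Hlo. rewrite D2s, D2c in Hhi.
  fold (mean_lo n L x j k) in Hlo. fold (mean_hi n U x j k) in Hhi.
  destruct (gap_fixed_attained D1 j L Hj D1j ltac:(lra)) as [v1 [S1 H1]].
  destruct (gap_fixed_attained D2 j U Hj D2j ltac:(lra)) as [v2 [S2 H2]].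
  destruct (gap_free_attained D1 j L Hj D1j ltac:(lra)) as [v3 [S3 H3]].
  destruct (gap_free_attained D2 j U Hj D2j ltac:(lra)) as [v4 [S4 H4]].
  cbv zeta in *. rewrite Hlo, D1c in *. rewrite Hhi, D2c in *.
  unfold candidate.
  set (t1 := decay beta k * _) in H1 |- *. set (t2 := decay beta k * _) in H2 |- *.
  set (t3 := decay beta (k + 1) * _) in H3 |- *. set (t4 := decay beta (k + 1) * _) in H4 |- *.
  destruct (rmax_cases (rmax t1 t2) (rmax t3 t4)) as [-> | ->];
    [destruct (rmax_cases t1 t2) as [-> | ->] | destruct (rmax_cases t3 t4) as [-> | ->]]; eauto.
Qed.

Lemma SSset_ge0 v : SSset n L U beta x v -> 0 <= v.
Proof.
  intros [y [Hy [l [Hl ->]]]]. destruct (LS_exists y Hy) as [l' [Hl' Hl0]].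
  rewrite (is_lub_u _ _ _ Hl Hl'). apply Rmult_le_pos; auto. left; apply exp_pos.
Qed.

Theorem smooth_sens_is_lub_ge2 : is_lub (SSset n L U beta x) (smooth_sens n L U beta x).
Proof.
  unfold smooth_sens. rewrite var_scaleE. pose proof coef_ge0. split.
  - intros v [y [Hy [l [Hl ->]]]].
    set (E := exp (- beta * INR (dist n x y))). assert (0 < E) by apply exp_pos.
    assert (l <= coef * max_cand n / E).
    { apply (proj2 Hl). intros w Hw. pose proof (LS_decay_le y w Hy Hw) as Hwd. fold E in Hwd.
      apply Rmult_le_reg_r with E; auto. unfold Rdiv. rewrite Rmult_assoc, Rinv_l by lra. lra. }
    apply Rmult_le_reg_r with (/ E); [now apply Rinv_0_lt_compat |].
    rewrite Rmult_assoc, Rinv_r by lra. lra.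
  - intros B HB. destruct (max_cand_attained n) as [-> | [j [k [Hj [Hk ->]]]]].
    + destruct (candidate_attained 0 0 ltac:(lia) ltac:(lia)) as [v [Hv _]].
      pose proof (SSset_ge0 v Hv). pose proof (HB v Hv). lra.
    + destruct (candidate_attained j k Hj Hk) as [v [Hv Hle]]. pose proof (HB v Hv). lra.
Qed.

End SmoothSensitivity.

(* With a single entry the variance is identically 0, and so is [var_scale 1]. *)
Lemma smooth_sens_is_lub_1 L U beta x : L < U -> is_lub (SSset 1 L U beta x) (smooth_sens 1 L U beta x).
Proof.
  intros HLU. unfold smooth_sens.
  replace (var_scale 1) with 0 by (unfold var_scale; simpl; rewrite rdivE by lra; field).
  rewrite Rmult_0_l.
  assert (LS0 : forall y w, LSset 1 L U y w -> w = 0).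
  { intros y w [z [_ [_ ->]]]. rewrite !variance_1, Rminus_0_r. apply Rabs_R0. }
  assert (LS0_mem : forall y, inbox 1 L U y -> LSset 1 L U y 0).
  { intros y Hy. set (b := if Req_EM_T (y 0%nat) L then U else L).
    assert (Hb : b <> y 0%nat /\ L <= b <= U) by (unfold b; destruct (Req_EM_T (y 0%nat) L); lra).
    exists (updR y 0 b). split; [apply inbox_updR; tauto |]. split; [apply dist_updR; [lia | tauto] |].
    rewrite !variance_1, Rminus_0_r, Rabs_R0. reflexivity. }
  assert (LS0_lub : forall y, inbox 1 L U y -> is_lub (LSset 1 L U y) 0).
  { intros y Hy. split.
    - intros w Hw. rewrite (LS0 y w Hw). lra.
    - intros b Hb. now apply Hb, LS0_mem. }
  split.
  - intros v [y [Hy [l [Hl ->]]]]. rewrite (is_lub_u _ _ _ Hl (LS0_lub y Hy)). lra.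
  - intros B HB. apply HB. exists (fun _ => L). split; [intros i _; lra |].
    exists 0. split; [apply LS0_lub; intros i _; lra | ring].
Qed.

Theorem smooth_sens_is_lub n L U beta x : (1 <= n)%nat -> L < U -> 0 < beta -> inbox n L U x ->
  is_lub (SSset n L U beta x) (smooth_sens n L U beta x).
Proof.
  intros Hn HLU Hbeta Hx. destruct (Nat.eq_dec n 1) as [-> | Hn1].
  - now apply smooth_sens_is_lub_1.
  - apply smooth_sens_is_lub_ge2; auto. lia.
Qed.

(** * Symbolic execution of real-RAM programs *)

Definition reaches (p : list instr) (s : state) (B : nat) (Q : state -> Prop) : Prop :=
  exists t, (t <= B)%nat /\ Q (run p t s).

Lemma run_halted p t s : step p s = None -> run p t s = s.
Proof. destruct t; simpl; auto. now intros ->. Qed.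

Lemma run_add p t1 t2 s : run p (t1 + t2) s = run p t2 (run p t1 s).
Proof.
  revert s. induction t1; intros s; simpl; auto.
  destruct (step p s) eqn:E; auto. symmetry. now apply run_halted.
Qed.

Lemma reaches_now p s B (Q : state -> Prop) : Q s -> reaches p s B Q.
Proof. intros. exists 0%nat. split; [lia | auto]. Qed.

Lemma reaches_step p s s' B Q : step p s = Some s' -> reaches p s' B Q -> reaches p s (S B) Q.
Proof. intros H [t [Ht HQ]]. exists (S t). split; [lia |]. simpl. now rewrite H. Qed.

Lemma reaches_le p s B B' Q : (B <= B')%nat -> reaches p s B Q -> reaches p s B' Q.
Proof. intros H [t [Ht HQ]]. exists t. split; [lia | auto]. Qed.

Lemma reaches_trans p s B1 B2 (Q1 Q : state -> Prop) :
  reaches p s B1 Q1 -> (forall s', Q1 s' -> reaches p s' B2 Q) -> reaches p s (B1 + B2) Q.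
Proof.
  intros [t1 [H1 HQ1]] K. destruct (K _ HQ1) as [t2 [H2 HQ]].
  exists (t1 + t2)%nat. split; [lia |]. now rewrite run_add.
Qed.

Lemma reaches_loop p (I : nat -> state -> Prop) (m Bb Be : nat) (Q : state -> Prop) :
  (forall q s, (q < m)%nat -> I q s -> reaches p s Bb (I (S q))) ->
  (forall s, I m s -> reaches p s Be Q) ->
  forall s, I 0%nat s -> reaches p s (m * Bb + Be) Q.
Proof.
  intros Hbody Hexit.
  assert (G : forall d q s, (q + d = m)%nat -> I q s -> reaches p s (d * Bb + Be) Q).
  { induction d; intros q s Hq Hs.
    - simpl. apply Hexit. now replace m with q by lia.
    - replace (S d * Bb + Be)%nat with (Bb + (d * Bb + Be))%nat by lia.
      apply reaches_trans with (I (S q)); [apply Hbody; auto; lia |].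
      intros s' Hs'. apply (IHd (S q)); auto; lia. }
  intros s Hs. now apply (G m 0%nat).
Qed.

(* Symbolic execution: each rule names the value written by one instruction,
   so that states stay small terms of nested [updR]/[updN]. *)
Section Rules.
Variables (p : list instr) (pc0 : nat) (N : nat -> nat) (Rr : nat -> R) (B : nat) (Q : state -> Prop).

Lemma reaches_setR d v0 : step p (mkState pc0 N Rr) = Some (mkState (S pc0) N (updR Rr d v0)) ->
  (forall v, v = v0 -> reaches p (mkState (S pc0) N (updR Rr d v)) B Q) ->
  reaches p (mkState pc0 N Rr) (S B) Q.
Proof. intros H K. eapply reaches_step; [exact H | now apply K]. Qed.

Lemma reaches_setN d w0 : step p (mkState pc0 N Rr) = Some (mkState (S pc0) (updN N d w0) Rr) ->
  (forall w, w = w0 -> reaches p (mkState (S pc0) (updN N d w) Rr) B Q) ->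
  reaches p (mkState pc0 N Rr) (S B) Q.
Proof. intros H K. eapply reaches_step; [exact H | now apply K]. Qed.

Lemma reaches_RStoreI i a : nth_error p pc0 = Some (RStoreI i a) ->
  (forall w v, w = N i -> v = Rr a -> reaches p (mkState (S pc0) N (updR Rr w v)) B Q) ->
  reaches p (mkState pc0 N Rr) (S B) Q.
Proof.
  intros H K. eapply reaches_step; [| now apply K]. unfold step; cbn [pc Nm Rm next]. now rewrite H.
Qed.

Lemma reaches_JNZ_zero i l : nth_error p pc0 = Some (JNZ i l) -> N i = 0%nat ->
  reaches p (mkState l N Rr) B Q -> reaches p (mkState pc0 N Rr) (S B) Q.
Proof.
  intros H Z K. eapply reaches_step; [| exact K]. unfold step; cbn [pc Nm Rm next].
  now rewrite H, Z.
Qed.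

Lemma reaches_JNZ_nonzero i l : nth_error p pc0 = Some (JNZ i l) -> N i <> 0%nat ->
  reaches p (mkState (S pc0) N Rr) B Q -> reaches p (mkState pc0 N Rr) (S B) Q.
Proof.
  intros H Z K. eapply reaches_step; [| exact K]. unfold step; cbn [pc Nm Rm next]. rewrite H.
  now destruct (Nat.eqb_spec (N i) 0).
Qed.

Lemma reaches_Jmp l : nth_error p pc0 = Some (Jmp l) ->
  reaches p (mkState l N Rr) B Q -> reaches p (mkState pc0 N Rr) (S B) Q.
Proof.
  intros H K. eapply reaches_step; [| exact K]. unfold step; cbn [pc Nm Rm next]. now rewrite H.
Qed.

(* The four-instruction idiom [d := e; if a < b goto +3; goto +4; d := c]
   computes [if_lt (Rr a) (Rr b) (Rr c) (Rr e)]. *)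
Lemma reaches_if_lt d a b c e :
  nth_error p pc0 = Some (RCopy d e) ->
  nth_error p (S pc0) = Some (JRLt a b (S (S (S pc0)))) ->
  nth_error p (S (S pc0)) = Some (Jmp (S (S (S (S pc0))))) ->
  nth_error p (S (S (S pc0))) = Some (RCopy d c) ->
  d <> a -> d <> b -> d <> c ->
  (forall v, v = if_lt (Rr a) (Rr b) (Rr c) (Rr e) ->
     reaches p (mkState (S (S (S (S pc0)))) N (updR Rr d v)) B Q) ->
  reaches p (mkState pc0 N Rr) (S (S (S B))) Q.
Proof.
  intros I0 I1 I2 I3 Da Db Dc K. specialize (K _ eq_refl).
  assert (Keep : forall r, r <> d -> updR Rr d (Rr e) r = Rr r)
    by (intros r Hr; unfold updR; destruct (Nat.eqb_spec r d); [lia | auto]).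
  eapply reaches_step. { unfold step; cbn [pc Nm Rm next]. now rewrite I0. }
  unfold if_lt in K. destruct (Rlt_dec (Rr a) (Rr b)) as [Hlt | Hge].
  - eapply reaches_step.
    { unfold step; cbn [pc Nm Rm next]. rewrite I1, !Keep by auto.
      now destruct (Rlt_dec (Rr a) (Rr b)). }
    eapply reaches_step. { unfold step; cbn [pc Nm Rm next]. now rewrite I3. }
    apply (reaches_le _ _ B); [lia |].
    replace (updR (updR Rr d (Rr e)) d (updR Rr d (Rr e) c)) with (updR Rr d (Rr c)); auto.
    rewrite Keep by auto. apply functional_extensionality. intros r. unfold updR.
    now destruct (Nat.eqb r d).
  - eapply reaches_step.
    { unfold step; cbn [pc Nm Rm next]. rewrite I1, !Keep by auto.
      destruct (Rlt_dec (Rr a) (Rr b)); [contradiction | reflexivity]. }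
    eapply reaches_step. { unfold step; cbn [pc Nm Rm next]. now rewrite I2. }
    apply (reaches_le _ _ B); [lia | auto].
Qed.
End Rules.

Lemma updR_same f k v j : j = k -> updR f k v j = v.
Proof. intros ->. unfold updR. now rewrite Nat.eqb_refl. Qed.

Lemma updR_other f k v j : j <> k -> updR f k v j = f j.
Proof. intros H. unfold updR. destruct (Nat.eqb_spec j k); [contradiction | auto]. Qed.

Lemma updN_same f k v j : j = k -> updN f k v j = v.
Proof. intros ->. unfold updN. now rewrite Nat.eqb_refl. Qed.

Lemma updN_other f k v j : j <> k -> updN f k v j = f j.
Proof. intros H. unfold updN. destruct (Nat.eqb_spec j k); [contradiction | auto]. Qed.

Lemma updN_id (N : nat -> nat) k v : N k = v -> N = updN N k v.
Proof.
  intros H. apply functional_extensionality. intros j. unfold updN.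
  destruct (Nat.eqb_spec j k); subst; auto.
Qed.

Lemma updR_id (Rr : nat -> R) k v : Rr k = v -> Rr = updR Rr k v.
Proof.
  intros H. apply functional_extensionality. intros j. unfold updR.
  destruct (Nat.eqb_spec j k); subst; auto.
Qed.

Ltac read_upd_step :=
  match goal with
  | |- context [updR ?f ?k ?v ?j] =>
      first [ rewrite (updR_other f k v j) by discriminate | rewrite (updR_same f k v j) by reflexivity
            | rewrite (updR_other f k v j) by lia | rewrite (updR_same f k v j) by lia ]
  | |- context [updN ?f ?k ?v ?j] =>
      first [ rewrite (updN_other f k v j) by discriminate | rewrite (updN_same f k v j) by reflexivity
            | rewrite (updN_other f k v j) by lia | rewrite (updN_same f k v j) by lia ]
  end.

Ltac read_upd_step_in H :=
  match type of H with
  | context [updR ?f ?k ?v ?j] =>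
      first [ rewrite (updR_other f k v j) in H by discriminate
            | rewrite (updR_same f k v j) in H by reflexivity
            | rewrite (updR_other f k v j) in H by lia | rewrite (updR_same f k v j) in H by lia ]
  | context [updN ?f ?k ?v ?j] =>
      first [ rewrite (updN_other f k v j) in H by discriminate
            | rewrite (updN_same f k v j) in H by reflexivity
            | rewrite (updN_other f k v j) in H by lia | rewrite (updN_same f k v j) in H by lia ]
  end.

Ltac read_upd := repeat read_upd_step.

(* Reads at literal addresses are settled by computation, which is fast; only
   symbolic addresses need the rewriting above. *)
Ltac read_upd_in H :=
  cbn [Nm Rm] in H;
  first [ cbn [updR updN Nat.eqb] in H;
          lazymatch type of H with context [Nat.eqb] => fail | _ => idtac end;
          lazymatch type of H with context [updR _ _ _ _] => fail | _ => idtac end;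
          lazymatch type of H with context [updN _ _ _ _] => fail | _ => idtac end
        | repeat read_upd_step_in H ].

Ltac intro_val := let v := fresh "v" in let Hv := fresh "Hv" in intros v Hv; read_upd_in Hv.
Ltac intro_nat := let w := fresh "w" in let Hw := fresh "Hw" in intros w Hw; read_upd_in Hw.

Ltac sym_step :=
  match goal with
  | |- reaches ?p (mkState ?pc _ _) _ _ =>
    let ins := eval cbv in (nth_error p pc) in
    lazymatch ins with
    | Some (RCopy _ _) =>
        first [ eapply reaches_if_lt;
                  [reflexivity | reflexivity | reflexivity | reflexivity
                  | discriminate | discriminate | discriminate |]; intro_val
              | eapply reaches_setR; [reflexivity |]; intro_val ]
    | Some (RStoreI _ _) =>
        eapply reaches_RStoreI; [reflexivity |];
        let w := fresh "w" in let v := fresh "v" in let Hw := fresh "Hw" in let Hv := fresh "Hv" in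
        intros w v Hw Hv; read_upd_in Hw; read_upd_in Hv
    | Some (Jmp _) => eapply reaches_Jmp; [reflexivity |]
    | Some (NConst _ _) => eapply reaches_setN; [reflexivity |]; intros ? ->
    | Some (NAdd _ _ _) => eapply reaches_setN; [reflexivity |]; intro_nat
    | Some (NSub _ _ _) => eapply reaches_setN; [reflexivity |]; intro_nat
    | Some (NMul _ _ _) => eapply reaches_setN; [reflexivity |]; intro_nat
    | Some (JNZ _ _) => fail
    | Some (JRLt _ _ _) => fail
    | Some Halt => fail
    | Some _ => eapply reaches_setR; [reflexivity |]; intro_val
    end
  end.

(* Rewrite a register function [N] with [N k = v] to [updN N k v], so that
   reads of [k] simplify by [read_upd]. *)
Ltac pin_N H := rewrite (updN_id _ _ _ H).
Ltac pin_R H := rewrite (updR_id _ _ _ H).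
Ltac jnz_nonzero := eapply reaches_JNZ_nonzero; [reflexivity | read_upd; lia |].
Ltac jnz_zero := eapply reaches_JNZ_zero; [reflexivity | read_upd; lia |].

Ltac run_to t :=
  repeat match goal with
  | |- reaches _ (mkState ?p _ _) _ _ => tryif constr_eq p t then fail else sym_step
  end.

Ltac close := try first [reflexivity | assumption | lia].

Ltac case_ltb :=
  repeat match goal with |- context [Nat.ltb ?a ?b] => destruct (Nat.ltb_spec a b); try lia end.

Ltac mem_eq H :=
  match goal with |- ?R0 ?a = _ =>
    match type of H with ?R0 ?b = _ => replace a with b by lia; exact H end
  end.

(** * The program and its loop invariants *)

(* Registers: N0 = n, N1 = 1, N2 = 10 and N9 = 0 throughout; after the set-up
   R3, R4, R5 = L, U, beta and R6 = 0.  Entry [x i] is kept at R[1000 + 10 i],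
   and the tables [best_sum x i k] and [best_sum (opp_seq x) i k] of the
   dynamic program at R[1001 + 10 k] and R[1002 + 10 k]. *)
Definition prog : list instr := [
  (* 0: set-up; park L, U, beta at R[10n+1007 ..] *)
  NConst 1 1;
  NConst 2 10;
  NMul 3 2 0;
  NConst 4 1007;
  NAdd 3 3 4;
  RStoreI 3 0;
  NAdd 3 3 1;
  RStoreI 3 1;
  NAdd 3 3 1;
  RStoreI 3 2;
  NConst 9 0;
  NAdd 6 0 9;
  (* 12: copy x_i from R[3+i] to R[1000+10i], for i = n-1 down to 0 *)
  JNZ 6 22;
  NConst 4 2;
  NAdd 4 6 4;
  NMul 5 6 2;
  NConst 8 990;
  NAdd 5 5 8;
  RLoadI 0 4;
  RStoreI 5 0;
  NSub 6 6 1;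
  Jmp 12;
  (* 22: restore L, U, beta to R3 .. R5; R6 = 0; first row of the tables *)
  NMul 3 2 0;
  NConst 4 1007;
  NAdd 3 3 4;
  RLoadI 3 3;
  NAdd 3 3 1;
  RLoadI 4 3;
  NAdd 3 3 1;
  RLoadI 5 3;
  RofN 6 9;
  NConst 3 1001;
  RStoreI 3 6;
  NConst 3 1002;
  RStoreI 3 6;
  NConst 6 0;
  (* 36: outer loop of the dynamic program, i = N6 *)
  NSub 8 0 6;
  JNZ 8 81;
  NMul 3 6 2;
  NConst 4 1000;
  NAdd 3 3 4;
  RLoadI 7 3;
  RSub 8 6 7;
  NAdd 4 3 1;
  RLoadI 9 4;
  RAdd 9 9 7;
  NAdd 5 4 2;
  RStoreI 5 9;
  NAdd 4 4 1;
  RLoadI 9 4;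
  RAdd 9 9 8;
  NAdd 5 4 2;
  RStoreI 5 9;
  NAdd 7 6 9;
  (* 54: update the tables in place, k = N7 = i down to 1 *)
  JNZ 7 79;
  NMul 3 7 2;
  NConst 4 1001;
  NAdd 3 3 4;
  NSub 4 3 2;
  RLoadI 10 3;
  RLoadI 11 4;
  RAdd 11 11 7;
  RCopy 12 10;
  JRLt 10 11 65;
  Jmp 66;
  RCopy 12 11;
  RStoreI 3 12;
  NAdd 3 3 1;
  NAdd 4 4 1;
  RLoadI 10 3;
  RLoadI 11 4;
  RAdd 11 11 8;
  RCopy 12 10;
  JRLt 10 11 75;
  Jmp 76;
  RCopy 12 11;
  RStoreI 3 12;
  NSub 7 7 1;
  Jmp 54;
  NAdd 6 6 1;
  Jmp 36;
  (* 81: R13 = sum of x, R14 = n - 1, R15 = running maximum *)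
  NMul 3 0 2;
  NConst 4 1001;
  NAdd 3 3 4;
  RLoadI 13 3;
  NSub 3 0 1;
  RofN 14 3;
  RCopy 15 6;
  NConst 6 0;
  (* 89: loop over the entry j = N6 *)
  NSub 8 0 6;
  JNZ 8 232;
  NMul 3 6 2;
  NConst 4 1000;
  NAdd 3 3 4;
  RLoadI 16 3;
  NConst 7 0;
  (* 96: loop over the number k = N7 of other changed entries; candidate (j, k) *)
  NSub 8 0 7;
  JNZ 8 230;
  NMul 3 7 2;
  NConst 4 1001;
  NAdd 3 3 4;
  NAdd 4 3 2;
  RLoadI 17 3;
  RLoadI 18 4;
  NAdd 3 3 1;
  NAdd 4 4 1;
  RLoadI 19 3;
  RLoadI 20 4;
  RSub 18 18 16;
  RCopy 21 17;
  JRLt 18 17 112;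
  Jmp 113;
  RCopy 21 18;
  RSub 19 6 19;
  RSub 20 6 20;
  RSub 20 20 16;
  RCopy 22 19;
  JRLt 19 20 119;
  Jmp 120;
  RCopy 22 20;
  RofN 23 7;
  NAdd 5 7 1;
  RofN 24 5;
  RSub 25 13 16;
  RSub 25 25 21;
  RMul 26 23 3;
  RAdd 25 25 26;
  RDiv 25 25 14;
  RSub 27 13 16;
  RSub 27 27 22;
  RMul 26 23 4;
  RAdd 27 27 26;
  RDiv 27 27 14;
  RMul 28 5 23;
  RSub 28 6 28;
  RExp 28 28;
  RMul 29 5 24;
  RSub 29 6 29;
  RExp 29 29;
  RSub 40 16 25;
  RMul 40 40 40;
  RSub 41 3 25;
  RMul 41 41 41;
  RSub 42 4 25;
  RMul 42 42 42;
  RSub 43 40 41;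
  RSub 44 6 43;
  RCopy 45 43;
  JRLt 43 44 150;
  Jmp 151;
  RCopy 45 44;
  RSub 43 40 42;
  RSub 44 6 43;
  RCopy 46 43;
  JRLt 43 44 156;
  Jmp 157;
  RCopy 46 44;
  RCopy 47 45;
  JRLt 45 46 160;
  Jmp 161;
  RCopy 47 46;
  RCopy 30 47;
  JRLt 47 40 164;
  Jmp 165;
  RCopy 30 40;
  RSub 40 16 27;
  RMul 40 40 40;
  RSub 41 3 27;
  RMul 41 41 41;
  RSub 42 4 27;
  RMul 42 42 42;
  RSub 43 40 41;
  RSub 44 6 43;
  RCopy 45 43;
  JRLt 43 44 176;
  Jmp 177;
  RCopy 45 44;
  RSub 43 40 42;
  RSub 44 6 43;
  RCopy 46 43;
  JRLt 43 44 182;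
  Jmp 183;
  RCopy 46 44;
  RCopy 47 45;
  JRLt 45 46 186;
  Jmp 187;
  RCopy 47 46;
  RCopy 31 47;
  JRLt 47 40 190;
  Jmp 191;
  RCopy 31 40;
  RSub 41 3 25;
  RMul 41 41 41;
  RSub 42 4 25;
  RMul 42 42 42;
  RCopy 32 41;
  JRLt 41 42 198;
  Jmp 199;
  RCopy 32 42;
  RSub 41 3 27;
  RMul 41 41 41;
  RSub 42 4 27;
  RMul 42 42 42;
  RCopy 33 41;
  JRLt 41 42 206;
  Jmp 207;
  RCopy 33 42;
  RMul 30 28 30;
  RMul 31 28 31;
  RMul 32 29 32;
  RMul 33 29 33;
  RCopy 34 30;
  JRLt 30 31 214;
  Jmp 215;
  RCopy 34 31;
  RCopy 35 32;
  JRLt 32 33 218;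
  Jmp 219;
  RCopy 35 33;
  RCopy 36 34;
  JRLt 34 35 222;
  Jmp 223;
  RCopy 36 35;
  RCopy 37 15;
  JRLt 15 36 226;
  Jmp 227;
  RCopy 37 36;
  RCopy 15 37;
  NAdd 7 7 1;
  Jmp 96;
  NAdd 6 6 1;
  Jmp 89;
  (* 232: output (n-1)/n^2 * R15 *)
  NMul 3 0 0;
  RofN 38 3;
  NSub 4 0 1;
  RofN 39 4;
  RDiv 40 39 38;
  RMul 0 40 15;
  Halt
].
Definition nat_consts (n : nat) (s : state) : Prop :=
  Nm s 0 = n /\ Nm s 1 = 1%nat /\ Nm s 2 = 10%nat /\ Nm s 9 = 0%nat.

Definition real_consts (L U beta : R) (s : state) : Prop :=
  Rm s 3 = L /\ Rm s 4 = U /\ Rm s 5 = beta /\ Rm s 6 = 0.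

Definition inv_copy (n : nat) (L U beta : R) (x : nat -> R) (q : nat) (s : state) : Prop :=
  pc s = 12%nat /\ nat_consts n s /\ Nm s 6 = (n - q)%nat /\
  Rm s (10 * n + 1007)%nat = L /\ Rm s (10 * n + 1008)%nat = U /\ Rm s (10 * n + 1009)%nat = beta /\
  (forall i, (i < n - q)%nat -> Rm s (3 + i)%nat = x i) /\
  (forall i, (n - q <= i < n)%nat -> Rm s (1000 + 10 * i)%nat = x i).

Lemma prologue n L U beta x N R0 :
  N 0%nat = n -> N 9%nat = 0%nat -> R0 0%nat = L -> R0 1%nat = U -> R0 2%nat = beta ->
  (forall i, (i < n)%nat -> R0 (3 + i)%nat = x i) ->
  reaches prog (mkState 0 N R0) 20 (inv_copy n L U beta x 0).
Proof.
  intros HN0 HN9 HR0 HR1 HR2 HX. pin_N HN9. pin_N HN0. pin_R HR0. pin_R HR1. pin_R HR2.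
  repeat sym_step.
  apply reaches_now. unfold inv_copy, nat_consts; cbn [pc Nm Rm].
  subst. repeat split; intros; read_upd; auto; try lia. apply HX; lia.
Qed.

Lemma copy_step n L U beta x q s : (q < n)%nat -> inv_copy n L U beta x q s ->
  reaches prog s 12 (inv_copy n L U beta x (S q)).
Proof.
  intros Hq. destruct s as [pc0 N R0].
  intros (Hpc & (HN0 & HN1 & HN2 & HN9) & HN6 & HL & HU & HB & HX1 & HX2).
  cbn [pc Nm Rm] in *. subst pc0.
  pin_N HN0. pin_N HN1. pin_N HN2. pin_N HN9. pin_N HN6.
  jnz_nonzero. repeat sym_step.
  apply reaches_now. unfold inv_copy, nat_consts; cbn [pc Nm Rm].
  repeat split; intros; read_upd; auto; try lia.
  all: try (apply HX1; lia).
  destruct (Nat.eq_dec i (n - q - 1)); read_upd.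
  - rewrite Hv0, Hv. replace w with (3 + i)%nat by lia. apply HX1. lia.
  - apply HX2. lia.
Qed.

Definition x_stored (n : nat) (x : nat -> R) (Rr : nat -> R) : Prop :=
  forall m, (m < n)%nat -> Rr (1000 + 10 * m)%nat = x m.

Definition tables_hold (x : nat -> R) (i : nat) (Rr : nat -> R) : Prop :=
  forall k, (k <= i)%nat ->
  Rr (1001 + 10 * k)%nat = best_sum x i k /\ Rr (1002 + 10 * k)%nat = best_sum (opp_seq x) i k.

Definition inv_dp (n : nat) (L U beta : R) (x : nat -> R) (i : nat) (s : state) : Prop :=
  pc s = 36%nat /\ nat_consts n s /\ Nm s 6 = i /\
  real_consts L U beta s /\ x_stored n x (Rm s) /\ tables_hold x i (Rm s).

Lemma copy_done n L U beta x s : inv_copy n L U beta x n s ->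
  reaches prog s 20 (inv_dp n L U beta x 0).
Proof.
  destruct s as [pc0 N R0]. intros (Hpc & (HN0 & HN1 & HN2 & HN9) & HN6 & HL & HU & HB & HX1 & HX2).
  cbn [pc Nm Rm] in *. subst pc0.
  pin_N HN0. pin_N HN1. pin_N HN2. pin_N HN9. pin_N HN6.
  jnz_zero. do 14 sym_step.
  apply reaches_now. unfold inv_dp, nat_consts, real_consts, x_stored, tables_hold; cbn [pc Nm Rm].
  repeat split; intros; read_upd; auto; try lia.
  - rewrite Hv. mem_eq HL.
  - rewrite Hv0. mem_eq HU.
  - rewrite Hv1. mem_eq HB.
  - apply HX2. lia.
  - replace k with 0%nat by lia. read_upd. rewrite Hv3, Hv2. reflexivity.
  - replace k with 0%nat by lia. read_upd. rewrite Hv4, Hv2. reflexivity.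
Qed.

(* Row [i] of the tables is overwritten in place from the top, so the entries
   above the counter [i - q] already hold row [i + 1]. *)
Definition inv_dp_row (n : nat) (L U beta : R) (x : nat -> R) (i q : nat) (s : state) : Prop :=
  pc s = 54%nat /\ nat_consts n s /\ Nm s 6 = i /\
  Nm s 7 = (i - q)%nat /\
  real_consts L U beta s /\ Rm s 7 = x i /\ Rm s 8 = opp_seq x i /\
  x_stored n x (Rm s) /\
  (forall k, (k <= i + 1)%nat ->
     Rm s (1001 + 10 * k)%nat = (if Nat.ltb (i - q) k then best_sum x (S i) k else best_sum x i k) /\
     Rm s (1002 + 10 * k)%nat =
       (if Nat.ltb (i - q) k then best_sum (opp_seq x) (S i) k else best_sum (opp_seq x) i k)).

Lemma dp_row_step n L U beta x i q s : (q < i)%nat -> (i < n)%nat -> inv_dp_row n L U beta x i q s ->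
  reaches prog s 25 (inv_dp_row n L U beta x i (S q)).
Proof.
  intros Hq Hi. destruct s as [pc0 N R0].
  intros (Hpc & (HN0 & HN1 & HN2 & HN9) & HN6 & HN7 & (HR3 & HR4 & HR5 & HR6) & HR7 & HR8 & HX & HG).
  cbn [pc Nm Rm] in *. subst pc0.
  pin_N HN0. pin_N HN1. pin_N HN2. pin_N HN9. pin_N HN6. pin_N HN7.
  pin_R HR3. pin_R HR4. pin_R HR5. pin_R HR6. pin_R HR7. pin_R HR8.
  jnz_nonzero. repeat sym_step.
  apply reaches_now. unfold inv_dp_row, nat_consts, real_consts, x_stored; cbn [pc Nm Rm].
  repeat split; intros; read_upd; auto; try lia.
  - destruct (Nat.eq_dec k (i - q)) as [Ek|Ek].
    + subst k. read_upd. rewrite Hv3, Hv2, Hv1, Hv0, Hv.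
      destruct (HG (i - q)%nat ltac:(lia)) as [G1 _].
      destruct (HG (i - q - 1)%nat ltac:(lia)) as [G2 _].
      replace w0 with (1001 + 10 * (i - q))%nat by lia.
      replace w1 with (1001 + 10 * (i - q - 1))%nat by lia.
      rewrite G1, G2. case_ltb. rewrite best_sum_mid by lia. reflexivity.
    + read_upd. destruct (HG k ltac:(lia)) as [G1 _]. rewrite G1. case_ltb; auto.
  - destruct (Nat.eq_dec k (i - q)) as [Ek|Ek].
    + subst k. read_upd. rewrite Hv8, Hv7, Hv6, Hv5, Hv4.
      destruct (HG (i - q)%nat ltac:(lia)) as [_ G1].
      destruct (HG (i - q - 1)%nat ltac:(lia)) as [_ G2].
      replace w3 with (1002 + 10 * (i - q))%nat by lia.
      replace w4 with (1002 + 10 * (i - q - 1))%nat by lia.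
      rewrite G1, G2. case_ltb. rewrite best_sum_mid by lia. reflexivity.
    + read_upd. destruct (HG k ltac:(lia)) as [_ G1]. rewrite G1. case_ltb; auto.
Qed.

Lemma dp_row_done n L U beta x i s : inv_dp_row n L U beta x i i s ->
  reaches prog s 5 (inv_dp n L U beta x (S i)).
Proof.
  destruct s as [pc0 N R0].
  intros (Hpc & (HN0 & HN1 & HN2 & HN9) & HN6 & HN7 & (HR3 & HR4 & HR5 & HR6) & HR7 & HR8 & HX & HG).
  cbn [pc Nm Rm] in *. subst pc0.
  pin_N HN0. pin_N HN1. pin_N HN2. pin_N HN9. pin_N HN6. pin_N HN7.
  jnz_zero. do 2 sym_step.
  apply reaches_now. unfold inv_dp, nat_consts, real_consts, tables_hold; cbn [pc Nm Rm].
  repeat split; intros; read_upd; close.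
  - destruct (HG k ltac:(lia)) as [G1 _]. rewrite G1. case_ltb; auto. replace k with 0%nat by lia.
    reflexivity.
  - destruct (HG k ltac:(lia)) as [_ G1]. rewrite G1. case_ltb; auto. replace k with 0%nat by lia.
    reflexivity.
Qed.

Lemma dp_step n L U beta x i s : (i < n)%nat -> inv_dp n L U beta x i s ->
  reaches prog s (25 * n + 25) (inv_dp n L U beta x (S i)).
Proof.
  intros Hi. destruct s as [pc0 N R0].
  intros (Hpc & (HN0 & HN1 & HN2 & HN9) & HN6 & (HR3 & HR4 & HR5 & HR6) & HX & HG).
  cbn [pc Nm Rm] in *. subst pc0.
  pin_N HN0. pin_N HN1. pin_N HN2. pin_N HN9. pin_N HN6.
  pin_R HR3. pin_R HR4. pin_R HR5. pin_R HR6.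
  apply (reaches_le _ _ (18 + (i * 25 + 5))); [lia|].
  sym_step. jnz_nonzero. do 16 sym_step.
  apply reaches_loop with (I := inv_dp_row n L U beta x i).
  - intros q s Hq Hs. apply dp_row_step; auto.
  - intros s Hs. apply dp_row_done; auto.
  - unfold inv_dp_row, nat_consts, real_consts, x_stored; cbn [pc Nm Rm].
    repeat split; intros; read_upd; close.
    + rewrite Hv. replace w1 with (1000 + 10 * i)%nat by lia. apply HX; auto.
    + rewrite Hv0, Hv. replace w1 with (1000 + 10 * i)%nat by lia. rewrite (HX i Hi). reflexivity.
    + apply HX; lia.
    + destruct (Nat.eq_dec k (S i)) as [Ek|Ek].
      * subst k. read_upd. rewrite Hv3, Hv2, Hv1, Hv. replace w2 with (1001 + 10 * i)%nat by lia.
        replace w1 with (1000 + 10 * i)%nat by lia. rewrite (HX i Hi).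
        destruct (HG i ltac:(lia)) as [G1 _]. rewrite G1. case_ltb. rewrite best_sum_top. reflexivity.
      * read_upd. destruct (HG k ltac:(lia)) as [G1 _]. rewrite G1. case_ltb. auto.
    + destruct (Nat.eq_dec k (S i)) as [Ek|Ek].
      * subst k. read_upd. rewrite Hv6, Hv5, Hv4, Hv0, Hv. replace w5 with (1002 + 10 * i)%nat by lia.
        replace w1 with (1000 + 10 * i)%nat by lia. rewrite (HX i Hi).
        destruct (HG i ltac:(lia)) as [_ G1]. rewrite G1. case_ltb. rewrite best_sum_top. reflexivity.
      * read_upd. destruct (HG k ltac:(lia)) as [_ G1]. rewrite G1. case_ltb. auto.
Qed.

Definition inv_scan (n : nat) (L U beta : R) (x : nat -> R) (j : nat) (s : state) : Prop :=
  pc s = 89%nat /\ nat_consts n s /\ Nm s 6 = j /\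
  real_consts L U beta s /\ x_stored n x (Rm s) /\ tables_hold x n (Rm s) /\
  Rm s 13 = best_sum x n n /\ Rm s 14 = INR (n - 1) /\ Rm s 15 = max_candidate n L U beta x j.

Definition inv_scan_row (n : nat) (L U beta : R) (x : nat -> R) (j k : nat) (s : state) : Prop :=
  pc s = 96%nat /\ nat_consts n s /\ Nm s 6 = j /\
  Nm s 7 = k /\
  real_consts L U beta s /\ x_stored n x (Rm s) /\ tables_hold x n (Rm s) /\
  Rm s 13 = best_sum x n n /\ Rm s 14 = INR (n - 1) /\ Rm s 16 = x j /\
  Rm s 15 = max_candidate_upto n L U beta x (max_candidate n L U beta x j) j k.

Definition final (n : nat) (L U beta : R) (x : nat -> R) (s : state) : Prop :=
  halted prog s /\ Rm s 0 = smooth_sens n L U beta x.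

Lemma dp_done n L U beta x s : inv_dp n L U beta x n s ->
  reaches prog s 12 (inv_scan n L U beta x 0).
Proof.
  destruct s as [pc0 N R0].
  intros (Hpc & (HN0 & HN1 & HN2 & HN9) & HN6 & (HR3 & HR4 & HR5 & HR6) & HX & HG).
  cbn [pc Nm Rm] in *. subst pc0.
  pin_N HN0. pin_N HN1. pin_N HN2. pin_N HN9. pin_N HN6.
  pin_R HR3. pin_R HR4. pin_R HR5. pin_R HR6.
  sym_step. jnz_zero. run_to 89%nat.
  apply reaches_now. unfold inv_scan, nat_consts, real_consts, x_stored, tables_hold; cbn [pc Nm Rm].
  repeat split; intros; read_upd; close.
  - apply HX; lia.
  - apply (proj1 (HG k ltac:(lia))).
  - apply (proj2 (HG k ltac:(lia))).
  - rewrite Hv. replace w1 with (1001 + 10 * n)%nat by lia. apply (proj1 (HG n ltac:(lia))).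
  - rewrite Hv0. rewrite Hw2. reflexivity.
Qed.

Lemma scan_row_done n L U beta x j s : (j < n)%nat -> inv_scan_row n L U beta x j n s ->
  reaches prog s 5 (inv_scan n L U beta x (S j)).
Proof.
  intros Hj. destruct s as [pc0 N R0].
  intros (Hpc & (HN0 & HN1 & HN2 & HN9) & HN6 & HN7 & (HR3 & HR4 & HR5 & HR6) & HX & HG
          & HR13 & HR14 & HR16 & HR15).
  cbn [pc Nm Rm] in *. subst pc0.
  pin_N HN0. pin_N HN1. pin_N HN2. pin_N HN9. pin_N HN6. pin_N HN7.
  sym_step. jnz_zero. run_to 89%nat.
  apply reaches_now. unfold inv_scan, nat_consts, real_consts, x_stored, tables_hold; cbn [pc Nm Rm].
  repeat split; intros; read_upd; close.
  - apply HX; lia.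
  - apply (proj1 (HG k ltac:(lia))).
  - apply (proj2 (HG k ltac:(lia))).
Qed.

Lemma scan_row_step n L U beta x j k s : (j < n)%nat -> (k < n)%nat ->
  inv_scan_row n L U beta x j k s ->
  reaches prog s 130 (inv_scan_row n L U beta x j (S k)).
Proof.
  intros Hj Hk. destruct s as [pc0 N R0].
  intros (Hpc & (HN0 & HN1 & HN2 & HN9) & HN6 & HN7 & (HR3 & HR4 & HR5 & HR6) & HX & HG
          & HR13 & HR14 & HR16 & HR15).
  cbn [pc Nm Rm] in *. subst pc0.
  pin_N HN0. pin_N HN1. pin_N HN2. pin_N HN9. pin_N HN6. pin_N HN7.
  pin_R HR3. pin_R HR4. pin_R HR5. pin_R HR6. pin_R HR13. pin_R HR14. pin_R HR15. pin_R HR16.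
  sym_step. jnz_nonzero. run_to 96%nat.
  apply reaches_now.
  unfold inv_scan_row, nat_consts, real_consts, x_stored, tables_hold; cbn [pc Nm Rm].
  (repeat split; intros; read_upd; close).
  - apply HX; lia.
  - apply (proj1 (HG k0 ltac:(lia))).
  - apply (proj2 (HG k0 ltac:(lia))).
  - replace w1 with (1001 + 10 * k)%nat in Hv by lia. rewrite (proj1 (HG k ltac:(lia))) in Hv.
    replace w2 with (1001 + 10 * (k + 1))%nat in Hv0 by lia.
    rewrite (proj1 (HG (k + 1)%nat ltac:(lia))) in Hv0.
    replace w3 with (1002 + 10 * k)%nat in Hv1 by lia. rewrite (proj2 (HG k ltac:(lia))) in Hv1.
    replace w4 with (1002 + 10 * (k + 1))%nat in Hv2 by lia.
    rewrite (proj2 (HG (k + 1)%nat ltac:(lia))) in Hv2.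
    (repeat match goal with H : ?v = _ |- _ => is_var v; subst v end).
    reflexivity.
Qed.

Lemma scan_step n L U beta x j s : (j < n)%nat -> inv_scan n L U beta x j s ->
  reaches prog s (130 * n + 12) (inv_scan n L U beta x (S j)).
Proof.
  intros Hj. destruct s as [pc0 N R0].
  intros (Hpc & (HN0 & HN1 & HN2 & HN9) & HN6 & (HR3 & HR4 & HR5 & HR6) & HX & HG & HR13 & HR14 & HR15).
  cbn [pc Nm Rm] in *. subst pc0.
  pin_N HN0. pin_N HN1. pin_N HN2. pin_N HN9. pin_N HN6.
  pin_R HR3. pin_R HR4. pin_R HR5. pin_R HR6. pin_R HR13. pin_R HR14. pin_R HR15.
  apply (reaches_le _ _ (7 + (n * 130 + 5))); [lia|].
  sym_step. jnz_nonzero. do 5 sym_step.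
  apply reaches_loop with (I := inv_scan_row n L U beta x j).
  - intros q s Hq Hs. apply scan_row_step; auto.
  - intros s Hs. apply scan_row_done; auto.
  - unfold inv_scan_row, nat_consts, real_consts, x_stored, tables_hold; cbn [pc Nm Rm].
    repeat split; intros; read_upd; close.
    + apply HX; lia.
    + apply (proj1 (HG k ltac:(lia))).
    + apply (proj2 (HG k ltac:(lia))).
    + rewrite Hv. replace w1 with (1000 + 10 * j)%nat by lia. apply HX; lia.
Qed.

Lemma scan_done n L U beta x s : inv_scan n L U beta x n s ->
  reaches prog s 12 (final n L U beta x).
Proof.
  destruct s as [pc0 N R0].
  intros (Hpc & (HN0 & HN1 & HN2 & HN9) & HN6 & (HR3 & HR4 & HR5 & HR6) & HX & HG & HR13 & HR14 & HR15).
  cbn [pc Nm Rm] in *. subst pc0.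
  pin_N HN0. pin_N HN1. pin_N HN2. pin_N HN9. pin_N HN6. pin_R HR15.
  sym_step. jnz_zero. run_to 238%nat.
  apply reaches_now. split; [unfold halted; reflexivity |]. cbn [Rm]. read_upd.
  rewrite Hv2, Hv1, Hv0, Hv. subst w0 w1. reflexivity.
Qed.

Lemma prog_reaches_final n L U beta x :
  reaches prog (init n L U beta x) (155 * n * n + 49 * n + 64) (final n L U beta x).
Proof.
  apply (reaches_le _ _
           (20 + ((n * 12 + 20) + ((n * (25 * n + 25) + 12) + (n * (130 * n + 12) + 12)))));
    [nia |].
  apply reaches_trans with (Q1 := inv_copy n L U beta x 0).
  { unfold init. apply (prologue n L U beta x); try reflexivity.
    intros i Hi. change (3 + i)%nat with (S (S (S i))). cbv beta iota.
    destruct (Nat.ltb_spec i n); [reflexivity|lia]. }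
  intros s1 Hs1. apply reaches_trans with (Q1 := inv_dp n L U beta x 0).
  { apply (reaches_loop _ (inv_copy n L U beta x) n 12 20); auto.
    - intros q s Hq Hs. apply copy_step; auto.
    - intros s Hs. apply copy_done; auto. }
  intros s2 Hs2. apply reaches_trans with (Q1 := inv_scan n L U beta x 0).
  { apply (reaches_loop _ (inv_dp n L U beta x) n (25 * n + 25) 12); auto.
    - intros q s Hq Hs. apply dp_step; auto.
    - intros s Hs. apply dp_done; auto. }
  intros s3 Hs3. apply (reaches_loop _ (inv_scan n L U beta x) n (130 * n + 12) 12); auto.
  - intros q s Hq Hs. apply scan_step; auto.
  - intros s Hs. apply scan_done; auto.
Qed.

Theorem mainTheorem5 :
  exists (p : list instr) (c : nat),
    forall (n : nat) (L U beta : R) (x : nat -> R),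
      (1 <= n)%nat -> L < U -> 0 < beta -> inbox n L U x ->
      exists t : nat,
        (t <= c * n * n + c)%nat /\
        halted p (run p t (init n L U beta x)) /\
        is_lub (SSset n L U beta x) (Rm (run p t (init n L U beta x)) 0%nat).
Proof.
  exists prog, 200%nat. intros n L U beta x Hn HLU Hbeta Hx.
  destruct (prog_reaches_final n L U beta x) as [t [Ht [Hhalt Hout]]].
  exists t. split; [nia |]. split; [exact Hhalt |].
  rewrite Hout. now apply smooth_sens_is_lub.
Qed.
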